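(* Let $k\in\frac12+\mathbb Z$ with $k>\frac52$, $N\in4\mathbb N$, and $f\in S_k(\Gamma_0^*(N))$. For real $x>0$ put $\psi(x):=\int_0^{i\infty}f(w)(w-x)^{k-2}\,dw$. Let $P_{k-2}$ be the polynomial $$P_{k-2}(z)=i^{k-1}\sum_{n=0}^{k-5/2}\left[\binom{k-2}{n}N^n\Lambda_f(k-1-n)+\binom{k-2}{n+\frac12}N^{k-n-\frac{11}{4}}\,i^{2n-k+\frac12}\,\Lambda_f\!\left(k-\tfrac32-n\right)\right]z^n.$$ Then there is a constant $C$ such that for all $x>1$, $$\left|P_{k-2}(ix)-\psi(Nx)+i^{1-2k}\,\psi(1/x)\,(\sqrt N x)^{k-\frac52}\right|\le C\,x^{k-\frac32}.$$
   Context: All complex powers use the principal branch of the logarithm ($-\pi<\arg\le\pi$), so $i^t=e^{i\pi t/2}$ for real $t$; $\binom{z}{w}:=\frac{\Gamma(z+1)}{\Gamma(w+1)\Gamma(z-w+1)}$. For odd $d$, $\epsilon_d=1$ if $d\equiv 1\pmod 4$, $\epsilon_d=i$ if $d\equiv3\pmod4$. For $\gamma=\begin{pmatrix}*&*\\c&d\end{pmatrix}\in\Gamma_0(N)$, $(f|_k\gamma)(z)=\left(\frac cd\right)\epsilon_d^{2k}(cz+d)^{-k}f(\gamma z)$ (Kronecker symbol), and $(f|_kW_N)(z)=(-i\sqrt Nz)^{-k}f(-1/(Nz))$. $S_k(\Gamma_0^*(N))$ is the space of holomorphic cusp forms $f$ with $f|_k\gamma=f$ for all $\gamma\in\Gamma_0(N)$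 and $f|_kW_N=f$. $\Lambda_f(s)=\int_0^\infty f(it)t^{s-1}dt$ (entire continuation). ($P_{k-2}$ is the polynomial $P_a$ of Theorem 3.1 for $a=k-2$, i.e. $\int_0^{i\infty}f(w)\Phi_{k-2}(z,w)dw$.) *)

From Stdlib Require Import Reals ZArith.
From Coquelicot Require Import Coquelicot.
From mathcomp Require Import ssreflect ssrbool ssrnat seq div prime.

Open Scope R_scope.

(* principal argument, in (-PI, PI] *)
Definition Carg (z : C) : R :=
  let x := fst z in let y := snd z in
  if Rlt_dec 0 x then atan (y / x)
  else if Rlt_dec x 0 then
    (if Rle_dec 0 y then atan (y / x) + PI else atan (y / x) - PI)
  else if Rlt_dec 0 y then PI / 2
  else if Rlt_dec y 0 then - (PI / 2) else 0.

(* z^a := exp(a Log z) with the principal branch, for real a; 0^a := 0 *)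
Definition cpow (z : C) (a : R) : C :=
  if Req_EM_T (Cmod z) 0 then RtoC 0
  else Cmult (RtoC (Rpower (Cmod z) a)) (cos (a * Carg z), sin (a * Carg z)).

Definition improper_0_oo (g : R -> C) : C :=
  RInt_gen (V := C_R_CompleteNormedModule) g (at_right 0) (Rbar_locally p_infty).

Definition Gamma (x : R) : R :=
  RInt_gen (V := R_CompleteNormedModule) (fun t => Rpower t (x - 1) * exp (- t)) (at_right 0) (Rbar_locally p_infty).

Definition binom (z w : R) : R :=
  Gamma (z + 1) / (Gamma (w + 1) * Gamma (z - w + 1)).

Definition legendre (a : Z) (p : nat) : Z :=
  let r := Z.to_nat (Z.modulo a (Z.of_nat p)) in
  if eqn r 0 then 0%Z
  else if has (fun x => eqn (modn (x * x)%N p) r) (iota 0 p) then 1%Z else (-1)%Z.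

Definition jacobi (a : Z) (n : nat) : Z :=
  foldr (fun p acc => (legendre a p ^ Z.of_nat (logn p n) * acc)%Z) 1%Z (primes n).

(* Kronecker symbol (c/d) for d odd: (c/-1) = -1 if c < 0, else 1 *)
Definition kronecker (c d : Z) : Z :=
  let j := jacobi c (Z.abs_nat d) in
  if (d <? 0)%Z && (c <? 0)%Z then (- j)%Z else j.

Definition eps (d : Z) : C :=
  if (Z.modulo d 4 =? 1)%Z then RtoC 1 else Ci.

Definition upper (z : C) : Prop := 0 < snd z.

Definition mob (a b c d : Z) (z : C) : C :=
  Cdiv (Cplus (Cmult (IZR a) z) (IZR b)) (Cplus (Cmult (IZR c) z) (IZR d)).

Definition slash (k : R) (f : C -> C) (a b c d : Z) (z : C) : C :=
  Cmult (Cmult (RtoC (IZR (kronecker c d))) (cpow (eps d) (2 * k)))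
        (Cmult (cpow (Cplus (Cmult (IZR c) z) (IZR d)) (- k)) (f (mob a b c d z))).

Definition slashW (k : R) (N : nat) (f : C -> C) (z : C) : C :=
  Cmult (cpow (Cmult (Cmult (Copp Ci) (RtoC (sqrt (INR N)))) z) (- k))
        (f (Copp (Cinv (Cmult (RtoC (INR N)) z)))).

Definition in_Gamma0 (N : nat) (a b c d : Z) : Prop :=
  (a * d - b * c = 1)%Z /\ Z.divide (Z.of_nat N) c.

Definition cusp_form_star (k : R) (N : nat) (f : C -> C) : Prop :=
  (forall z, upper z -> ex_derive (K := C_AbsRing) (V := C_NormedModule) f z) /\
  (forall a b c d, in_Gamma0 N a b c d ->
     forall z, upper z -> slash k f a b c d z = f z) /\
  (forall z, upper z -> slashW k N f z = f z) /\
  (* vanishes at every cusp: for every gamma in SL_2(Z),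
     (cz+d)^(-k) f(gamma z) -> 0 as Im z -> oo, uniformly in Re z *)
  (forall a b c d, (a * d - b * c = 1)%Z ->
     forall e, 0 < e -> exists Y, forall z, Y < snd z ->
       Cmod (Cmult (cpow (Cplus (Cmult (IZR c) z) (IZR d)) (- k))
                   (f (mob a b c d z))) < e).

Definition Lambda (f : C -> C) (s : R) : C :=
  improper_0_oo (fun t => Cmult (f (0, t)) (RtoC (Rpower t (s - 1)))).

(* psi(x) = int_0^{i oo} f(w) (w - x)^(k-2) dw = i int_0^oo f(it) (it - x)^(k-2) dt *)
Definition psi (k : R) (f : C -> C) (x : R) : C :=
  Cmult Ci (improper_0_oo (fun t => Cmult (f (0, t)) (cpow (Cminus (0, t) (RtoC x)) (k - 2)))).

(* P_{k-2}(z), where k = m + 1/2, so that k - 5/2 = m - 2 *)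
Definition Pk2 (k : R) (m N : nat) (f : C -> C) (z : C) : C :=
  Cmult (cpow Ci (k - 1))
   (sum_n (G := C_AbelianMonoid) (fun n =>
      Cmult (Cplus
        (Cmult (RtoC (binom (k - 2) (INR n) * Rpower (INR N) (INR n)))
               (Lambda f (k - 1 - INR n)))
        (Cmult (Cmult (RtoC (binom (k - 2) (INR n + /2) * Rpower (INR N) (k - INR n - 11/4)))
                      (cpow Ci (2 * INR n - k + /2)))
               (Lambda f (k - 3/2 - INR n))))
        (Cpow z n)) (m - 2)).

From Stdlib Require Import Reals ZArith Lra Psatz Lia.
From Coquelicot Require Import Coquelicot.
Open Scope R_scope.

(** The three terms are estimated separately.  The period polynomial has degree [k - 5/2].
    For the period integral [psi], the cusp form decays exponentially up the imaginary axis: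
    [f] is 1-periodic, holomorphic and tends to 0 at [i oo], and integrating
    [(f z - f z0) 2 pi i / (e^(2 pi i (z - z0)) - 1)] around a period rectangle above [z0]
    (Goursat's theorem, with one removable point) shows [|f (i y)| <= 3 e^(-2 pi (y - y1))].
    The Fricke involution turns this decay into boundedness of [f (i t)] as [t -> 0+].
    Hence [t -> f (i t) (i t - y)^(k-2)] is integrable on [(0, oo)] with integral
    [O((1 + y)^(k-2))], which bounds [psi (N x)] by [O(x^(k-2))] and [psi (1/x)] by a constant. *)

Lemma Cmod_fst_le (z : C) : Rabs (fst z) <= Cmod z.
Proof. pose proof (Rmax_Cmod z). pose proof (Rmax_l (Rabs (fst z)) (Rabs (snd z))). lra. Qed.

Lemma Cmod_snd_le (z : C) : Rabs (snd z) <= Cmod z.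
Proof. pose proof (Rmax_Cmod z). pose proof (Rmax_r (Rabs (fst z)) (Rabs (snd z))). lra. Qed.

Lemma Cmod_le_Rabs_sum (z : C) : Cmod z <= Rabs (fst z) + Rabs (snd z).
Proof.
  destruct z as [x y]; unfold Cmod; simpl.
  apply Rsqr_incr_0_var; [|pose proof (Rabs_pos x); pose proof (Rabs_pos y); lra].
  rewrite Rsqr_sqrt by nra. unfold Rsqr.
  assert (x * x = Rabs x * Rabs x) by (rewrite <- Rabs_mult; rewrite Rabs_right; nra).
  assert (y * y = Rabs y * Rabs y) by (rewrite <- Rabs_mult; rewrite Rabs_right; nra).
  pose proof (Rabs_pos x); pose proof (Rabs_pos y). nra.
Qed.

Lemma Cmod_sub_sym (z w : C) : Cmod (z - w) = Cmod (w - z).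
Proof. rewrite <- Cmod_opp. f_equal. ring. Qed.

Lemma Cmod_sub_ge (a b : C) : Cmod a - Cmod b <= Cmod (a - b).
Proof. pose proof (Cmod_triangle (a - b) b). replace (a - b + b)%C with a in H by ring. lra. Qed.

Lemma Cmod_imag (y : R) : 0 <= y -> Cmod (0, y) = y.
Proof.
  intros Hy. unfold Cmod; simpl.
  replace (0 * (0 * 1) + y * (y * 1)) with (y ^ 2) by ring. apply sqrt_pow2, Hy.
Qed.

Lemma norm_C_R (z : C) : @norm R_AbsRing C_R_NormedModule z = Cmod z.
Proof.
  destruct z as [x y]. unfold norm; simpl. unfold prod_norm, Cmod; simpl. f_equal.
  change (norm x) with (Rabs x). change (norm y) with (Rabs y).
  rewrite !Rmult_1_r, <- !Rabs_mult, (Rabs_right (x * x)), (Rabs_right (y * y)) by nra.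
  reflexivity.
Qed.

Lemma scal_C_R (r : R) (z : C) : @scal R_Ring C_R_ModuleSpace r z = (r * z)%C.
Proof.
  destruct z as [x y]. unfold scal; simpl. unfold prod_scal, Cmult, RtoC; simpl.
  change (scal r x) with (r * x). change (scal r y) with (r * y). f_equal; ring.
Qed.

Lemma ball_C_R_of_Cmod (z w : C) (e : R) : Cmod (w - z) < e -> @ball C_R_NormedModule z e w.
Proof.
  intros H. pose proof (Cmod_fst_le (w - z)). pose proof (Cmod_snd_le (w - z)).
  destruct z as [a b], w as [c d]. simpl in *. split.
  - change (Rabs (c + - a) < e). lra.
  - change (Rabs (d + - b) < e). lra.
Qed.

Lemma Cmod_of_ball_C_R (z w : C) (e : R) : @ball C_R_NormedModule z e w -> Cmod (w - z) < 2 * e.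
Proof.
  intros [H1 H2]. pose proof (Cmod_le_Rabs_sum (w - z)). destruct z as [a b], w as [c d].
  change (Rabs (c + - a) < e) in H1. change (Rabs (d + - b) < e) in H2. simpl in *. lra.
Qed.

(** * The complex exponential *)

Definition Cexp (w : C) : C := (exp (fst w) * cos (snd w), exp (fst w) * sin (snd w)).

Lemma Cexp_add (w1 w2 : C) : Cexp (w1 + w2) = (Cexp w1 * Cexp w2)%C.
Proof.
  destruct w1 as [a b], w2 as [c d]. unfold Cexp, Cplus, Cmult; simpl.
  rewrite exp_plus, cos_plus, sin_plus. f_equal; ring.
Qed.

Lemma Cmod_Cexp (w : C) : Cmod (Cexp w) = exp (fst w).
Proof.
  destruct w as [a b]. unfold Cexp, Cmod. cbn [fst snd].
  replace ((exp a * cos b) ^ 2 + (exp a * sin b) ^ 2) with (exp a ^ 2)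
    by (pose proof (sin2_cos2 b); unfold Rsqr in *; nra).
  apply sqrt_pow2. left; apply exp_pos.
Qed.

Lemma Cexp_2PI_i (w : C) : Cexp (w + (0, 2 * PI)) = Cexp w.
Proof.
  rewrite Cexp_add. unfold Cexp at 2; simpl. rewrite exp_0, Rmult_1_l, cos_2PI, sin_2PI.
  destruct w; unfold Cexp, Cmult; simpl. f_equal; ring.
Qed.

Lemma exp_sub_1_sub_bound (u : R) : Rabs u <= /2 -> 0 <= exp u - 1 - u <= 2 * u ^ 2.
Proof.
  intros Hu. apply Rabs_le_between in Hu. split; [pose proof (exp_ineq1_le u); lra|].
  (* from [exp u * exp (-u) = 1] and [1 - u <= exp (-u)] *)
  pose proof (exp_ineq1_le (- u)). pose proof (exp_pos u).
  assert (exp u * exp (- u) = 1) by (rewrite <- exp_plus, Rplus_opp_r; apply exp_0).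
  assert (exp u * (1 - u) <= 1) by nra.
  assert (exp u <= 1 + u + 2 * u ^ 2) by (apply Rmult_le_reg_r with (1 - u); nra).
  lra.
Qed.

Lemma cos_sub_1_bound (v : R) : Rabs v <= /2 -> Rabs (cos v - 1) <= v ^ 2 / 2.
Proof.
  intros Hv. apply Rabs_le_between in Hv. pose proof PI2_3_2.
  destruct (COS v) as [H1 _]; try lra.
  replace (cos_lb v) with (1 - v ^ 2 / 2 + v ^ 4 / 24 - v ^ 6 / 720) in H1
    by (unfold cos_lb, cos_approx, cos_term; simpl; field).
  assert (cos v <= 1) by (destruct (COS_bound v); lra).
  rewrite Rabs_left1 by lra.
  assert (0 <= v ^ 2 <= /4) by nra.
  assert (v ^ 6 = v ^ 4 * v ^ 2) by ring. assert (v ^ 4 = v ^ 2 * v ^ 2) by ring.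
  nra.
Qed.

Lemma sin_sub_id_bound_nonneg (v : R) : 0 <= v <= /2 -> Rabs (sin v - v) <= v ^ 2.
Proof.
  intros Hv. pose proof PI2_3_2.
  destruct (SIN v) as [H1 _]; try lra.
  replace (sin_lb v) with (v - v ^ 3 / 6 + v ^ 5 / 120 - v ^ 7 / 5040) in H1
    by (unfold sin_lb, sin_approx, sin_term; simpl; field).
  assert (sin v <= v).
  { destruct (Req_dec v 0) as [->|]; [rewrite sin_0; lra|]. pose proof (sin_lt_x v); lra. }
  assert (0 <= v ^ 2 <= /4) by nra.
  assert (v ^ 3 = v * v ^ 2) by ring. assert (v ^ 5 = v ^ 3 * v ^ 2) by ring.
  assert (v ^ 7 = v ^ 5 * v ^ 2) by ring.
  assert (0 <= v ^ 3) by nra. assert (0 <= v ^ 5) by nra. assert (0 <= v ^ 7) by nra.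
  rewrite Rabs_left1 by nra. nra.
Qed.

Lemma sin_sub_id_bound (v : R) : Rabs v <= /2 -> Rabs (sin v - v) <= v ^ 2.
Proof.
  intros Hv. apply Rabs_le_between in Hv. destruct (Rle_dec 0 v).
  - apply sin_sub_id_bound_nonneg; lra.
  - replace (sin v - v) with (- (sin (- v) - - v)) by (rewrite sin_neg; ring).
    rewrite Rabs_Ropp. replace (v ^ 2) with ((- v) ^ 2) by ring.
    apply sin_sub_id_bound_nonneg; lra.
Qed.

Lemma Cexp_sub_1_sub_bound (h : C) : Cmod h <= /2 -> Cmod (Cexp h - 1 - h) <= 8 * Cmod h ^ 2.
Proof.
  intros Hh. destruct h as [u v].
  pose proof (Cmod_fst_le (u, v)) as Hu. pose proof (Cmod_snd_le (u, v)) as Hv. simpl in Hu, Hv.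
  set (m := Cmod (u, v)) in *.
  assert (Hu2 : Rabs u <= /2) by lra. assert (Hv2 : Rabs v <= /2) by lra.
  destruct (exp_sub_1_sub_bound u Hu2) as [E1 E2].
  pose proof (cos_sub_1_bound v Hv2) as Co. pose proof (sin_sub_id_bound v Hv2) as Si.
  assert (Hum : u ^ 2 <= m ^ 2) by (rewrite <- (pow2_abs u); apply pow_incr; split; [apply Rabs_pos|lra]).
  assert (Hvm : v ^ 2 <= m ^ 2) by (rewrite <- (pow2_abs v); apply pow_incr; split; [apply Rabs_pos|lra]).
  unfold Cexp, Cminus, Cplus, Copp, RtoC; simpl.
  eapply Rle_trans; [apply (Cmod_le_Rabs_sum (_, _))|]; simpl.
  assert (HA : Rabs (exp u * cos v + - (1) + - u) <= 3 * m ^ 2).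
  { replace (exp u * cos v + - (1) + - u) with ((exp u - 1 - u) * cos v + (1 + u) * (cos v - 1)) by ring.
    eapply Rle_trans; [apply Rabs_triang|]. rewrite !Rabs_mult.
    assert (Rabs (cos v) <= 1) by (apply Rabs_le; apply COS_bound).
    assert (Rabs (1 + u) <= 3 / 2) by (apply Rabs_le; apply Rabs_le_between in Hu2; lra).
    rewrite (Rabs_right (exp u - 1 - u)) by lra.
    pose proof (Rabs_pos (cos v)). pose proof (Rabs_pos (1 + u)). pose proof (Rabs_pos (cos v - 1)).
    nra. }
  assert (HB : Rabs (exp u * sin v + - 0 + - v) <= 5 * m ^ 2).
  { replace (exp u * sin v + - 0 + - v) with ((exp u - 1) * sin v + (sin v - v)) by ring.
    eapply Rle_trans; [apply Rabs_triang|]. rewrite !Rabs_mult.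
    rewrite <- (pow2_abs u) in E2. rewrite <- (pow2_abs v) in Si.
    pose proof (Rabs_pos u). pose proof (Rabs_pos v).
    assert (Rabs (exp u - 1) <= 2 * Rabs u).
    { replace (exp u - 1) with (u + (exp u - 1 - u)) by ring. eapply Rle_trans; [apply Rabs_triang|].
      rewrite (Rabs_right (exp u - 1 - u)) by lra. nra. }
    assert (Rabs (sin v) <= 2 * Rabs v).
    { replace (sin v) with (v + (sin v - v)) by ring. eapply Rle_trans; [apply Rabs_triang|]. nra. }
    pose proof (Rabs_pos (sin v)). pose proof (Rabs_pos (exp u - 1)).
    assert (Rabs (exp u - 1) * Rabs (sin v) <= 2 * Rabs u * (2 * Rabs v)) by (apply Rmult_le_compat; lra).
    assert (Rabs u * Rabs v <= m * m) by (apply Rmult_le_compat; lra).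
    nra. }
  lra.
Qed.

(** * Complex differentiability *)

Definition has_Cderiv (H : C -> C) (z l : C) : Prop :=
  forall eps, 0 < eps -> exists del, 0 < del /\
    forall w, Cmod (w - z) < del -> Cmod (H w - H z - l * (w - z)) <= eps * Cmod (w - z).

Definition Cderivable (H : C -> C) (z : C) : Prop := exists l, has_Cderiv H z l.

Definition Ccont (H : C -> C) (z : C) : Prop :=
  forall eps, 0 < eps -> exists del, 0 < del /\
    forall w, Cmod (w - z) < del -> Cmod (H w - H z) < eps.

(* Coquelicot's differentiation rules are stated on [AbsRing_NormedModule C_AbsRing] (round balls),
   while [cusp_form_star] uses [C_NormedModule] (square balls); [has_Cderiv] is common to both. *)
Notation is_Cderive := (@is_derive C_AbsRing (AbsRing_NormedModule C_AbsRing)).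

Lemma has_Cderiv_is_derive (H : C -> C) (z l : C) : has_Cderiv H z l <-> is_Cderive H z l.
Proof.
  split.
  - intros Hd. split; [apply is_linear_scal_l|].
    intros x Hx. apply (@is_filter_lim_locally_unique C_AbsRing (AbsRing_NormedModule C_AbsRing)) in Hx.
    subst x. intros eps. destruct (Hd eps (cond_pos eps)) as [d [Hd0 Hdd]].
    exists (mkposreal (d / 2) ltac:(lra)). intros w Hw.
    change (Cmod (w - z) < d / 2) in Hw. pose proof (Cmod_ge_0 (w - z)).
    change (Cmod (H w - H z - (w - z) * l) <= eps * Cmod (w - z)).
    rewrite (Cmult_comm (w - z) l). apply Hdd. lra.
  - intros [_ Hd] eps Heps. specialize (Hd z (fun P HP => HP)).
    destruct (Hd (mkposreal eps Heps)) as [d Hdd].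
    exists d. split; [apply cond_pos|]. intros w Hw. specialize (Hdd w Hw).
    change (Cmod (H w - H z - (w - z) * l) <= eps * Cmod (w - z)) in Hdd.
    rewrite (Cmult_comm l (w - z)). exact Hdd.
Qed.

Lemma has_Cderiv_of_is_derive_C (H : C -> C) (z l : C) :
  @is_derive C_AbsRing C_NormedModule H z l -> has_Cderiv H z l.
Proof.
  intros [_ Hd] eps Heps. specialize (Hd z (fun P HP => HP)).
  destruct (Hd (mkposreal eps Heps)) as [d Hdd].
  exists d. split; [apply cond_pos|]. intros w Hw. specialize (Hdd w Hw).
  change (Cmod (H w - H z - (w - z) * l) <= eps * Cmod (w - z)) in Hdd.
  rewrite (Cmult_comm l (w - z)). exact Hdd.
Qed.

Lemma Cderivable_of_ex_derive_C (H : C -> C) (z : C) :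
  @ex_derive C_AbsRing C_NormedModule H z -> Cderivable H z.
Proof. intros [l Hl]. exists l. apply has_Cderiv_of_is_derive_C, Hl. Qed.

Lemma has_Cderiv_cont (H : C -> C) (z l : C) : has_Cderiv H z l -> Ccont H z.
Proof.
  intros Hd eps Heps. destruct (Hd 1 Rlt_0_1) as [d [Hd0 Hdd]].
  pose proof (Cmod_ge_0 l). set (r := eps / (Cmod l + 2)).
  assert (Hr : 0 < r) by (apply Rdiv_lt_0_compat; lra).
  exists (Rmin d r). split; [apply Rmin_pos; lra|].
  intros w Hw. pose proof (Rmin_l d r). pose proof (Rmin_r d r).
  specialize (Hdd w ltac:(lra)).
  replace (H w - H z)%C with (H w - H z - l * (w - z) + l * (w - z))%C by ring.
  eapply Rle_lt_trans; [apply Cmod_triangle|]. rewrite Cmod_mult.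
  pose proof (Cmod_ge_0 (w - z)).
  assert (Cmod (w - z) * (Cmod l + 2) < eps).
  { apply Rlt_le_trans with (r * (Cmod l + 2)); [apply Rmult_lt_compat_r; lra|].
    right; unfold r; field; lra. }
  nra.
Qed.

Lemma Cderivable_cont (H : C -> C) (z : C) : Cderivable H z -> Ccont H z.
Proof. intros [l Hl]. exact (has_Cderiv_cont H z l Hl). Qed.

Lemma has_Cderiv_Cexp (z : C) : has_Cderiv Cexp z (Cexp z).
Proof.
  intros eps Heps. pose proof (exp_pos (fst z)) as Hez.
  set (r := eps / (8 * exp (fst z) + 1)).
  assert (Hr : 0 < r) by (apply Rdiv_lt_0_compat; lra).
  exists (Rmin (/2) r). split; [apply Rmin_pos; lra|].
  intros w Hw. pose proof (Rmin_l (/2) r). pose proof (Rmin_r (/2) r).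
  set (h := (w - z)%C) in *.
  replace (Cexp w - Cexp z - Cexp z * h)%C with (Cexp z * (Cexp h - 1 - h))%C
    by (replace w with (z + h)%C at 1 by (unfold h; ring); rewrite Cexp_add; ring).
  rewrite Cmod_mult, Cmod_Cexp.
  pose proof (Cexp_sub_1_sub_bound h ltac:(lra)). pose proof (Cmod_ge_0 h).
  assert (Cmod h * (8 * exp (fst z) + 1) <= eps).
  { apply Rle_trans with (r * (8 * exp (fst z) + 1)); [apply Rmult_le_compat_r; lra|].
    right; unfold r; field; lra. }
  apply Rle_trans with (exp (fst z) * (8 * Cmod h ^ 2)); [apply Rmult_le_compat_l; lra|].
  nra.
Qed.

Lemma has_Cderiv_Cinv (z : C) : z <> 0%C -> has_Cderiv Cinv z (- / (z * z)).
Proof.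
  intros Hz eps Heps. assert (Hmz : 0 < Cmod z) by (apply Cmod_gt_0; exact Hz).
  set (m := Cmod z) in *.
  assert (Hr : 0 < eps * m ^ 3 / 2) by (pose proof (pow_lt m 3 Hmz); nra).
  exists (Rmin (m / 2) (eps * m ^ 3 / 2)). split; [apply Rmin_pos; lra|].
  intros w Hw. pose proof (Rmin_l (m / 2) (eps * m ^ 3 / 2)). pose proof (Rmin_r (m / 2) (eps * m ^ 3 / 2)).
  pose proof (Cmod_sub_ge z w). rewrite Cmod_sub_sym in H1.
  assert (Hw0 : m / 2 <= Cmod w) by (unfold m in *; lra).
  assert (Hwn : w <> 0%C) by (intro E; rewrite E, Cmod_0 in Hw0; lra).
  replace (/ w - / z - - / (z * z) * (w - z))%C
    with ((w - z) * (w - z) * / (z * z * w))%C by (field; split; auto).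
  rewrite Cmod_mult, Cmod_mult, Cmod_inv, !Cmod_mult.
  2: { intro E. apply (f_equal Cmod) in E. rewrite !Cmod_mult, Cmod_0 in E. unfold m in *. assert (0 < Cmod z * Cmod z * Cmod w) by (apply Rmult_lt_0_compat; [nra|lra]). lra. }
  fold m. pose proof (Cmod_ge_0 (w - z)) as Hh0. set (h := Cmod (w - z)) in *. set (mw := Cmod w) in *.
  apply Rle_trans with (h * h * / (m * m * (m / 2))).
  { apply Rmult_le_compat_l; [nra|]. apply Rinv_le_contravar; [nra|]. apply Rmult_le_compat_l; nra. }
  replace (h * h * / (m * m * (m / 2))) with (h * (2 * h / m ^ 3)) by (field; lra).
  rewrite (Rmult_comm eps h). apply Rmult_le_compat_l; [lra|].
  apply Rle_trans with (2 * (eps * m ^ 3 / 2) / m ^ 3).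
  { unfold Rdiv. apply Rmult_le_compat_r; [left; apply Rinv_0_lt_compat, pow_lt; lra|lra]. }
  right. field. lra.
Qed.

Local Ltac to_is_derive := unfold Cderivable; setoid_rewrite has_Cderiv_is_derive.

Lemma Cderivable_const (a z : C) : Cderivable (fun _ => a) z.
Proof. to_is_derive. eexists. apply (@is_derive_const C_AbsRing (AbsRing_NormedModule C_AbsRing)). Qed.

Lemma Cderivable_id (z : C) : Cderivable (fun w => w) z.
Proof. to_is_derive. eexists. apply (@is_derive_id C_AbsRing). Qed.

Lemma Cderivable_minus (f g : C -> C) (z : C) :
  Cderivable f z -> Cderivable g z -> Cderivable (fun w => f w - g w)%C z.
Proof.
  to_is_derive. intros [a Ha] [b Hb]. eexists.
  apply (@is_derive_minus C_AbsRing (AbsRing_NormedModule C_AbsRing) f g z a b Ha Hb).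
Qed.

Lemma Cderivable_mult (f g : C -> C) (z : C) :
  Cderivable f z -> Cderivable g z -> Cderivable (fun w => f w * g w)%C z.
Proof.
  to_is_derive. intros [a Ha] [b Hb]. eexists.
  apply (@is_derive_mult C_AbsRing f g z a b Ha Hb). intros; apply Cmult_comm.
Qed.

Lemma Cderivable_comp (f g : C -> C) (z : C) :
  Cderivable g z -> Cderivable f (g z) -> Cderivable (fun w => f (g w)) z.
Proof.
  to_is_derive. intros [a Ha] [b Hb]. eexists.
  apply (@is_derive_comp C_AbsRing (AbsRing_NormedModule C_AbsRing) f g z b a Hb Ha).
Qed.

Lemma Cderivable_Cexp (z : C) : Cderivable Cexp z.
Proof. exists (Cexp z). apply has_Cderiv_Cexp. Qed.

Lemma Cderivable_Cinv (z : C) : z <> 0%C -> Cderivable Cinv z.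
Proof. intros Hz. eexists. apply has_Cderiv_Cinv, Hz. Qed.

(** * Integrals of complex-valued functions of a real variable *)

Definition CInt (g : R -> C) (a b : R) : C := @RInt C_R_CompleteNormedModule g a b.
Definition ex_CInt (g : R -> C) (a b : R) : Prop := @ex_RInt C_R_NormedModule g a b.

Definition Ccont_real (g : R -> C) (t : R) : Prop :=
  forall eps, 0 < eps -> exists del, 0 < del /\
    forall s, Rabs (s - t) < del -> Cmod (g s - g t) < eps.

Lemma Ccont_real_continuous (g : R -> C) (t : R) :
  Ccont_real g t -> @continuous R_UniformSpace C_R_NormedModule g t.
Proof.
  intros Hc. apply filterlim_locally. intros eps.
  destruct (Hc eps (cond_pos eps)) as [d [Hd0 Hd]].
  exists (mkposreal d Hd0). intros s Hs. apply ball_C_R_of_Cmod, Hd, Hs.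
Qed.

Lemma Ccont_real_comp (H : C -> C) (p : R -> C) (t : R) :
  (forall s, Cmod (p s - p t) <= Rabs (s - t)) -> Ccont H (p t) -> Ccont_real (fun s => H (p s)) t.
Proof.
  intros Hp Hc eps Heps. destruct (Hc eps Heps) as [d [Hd Hdd]].
  exists d. split; [exact Hd|]. intros s Hs. apply Hdd. eapply Rle_lt_trans; [apply Hp|exact Hs].
Qed.

Lemma Ccont_real_pair (u v : R -> R) (t : R) :
  @continuous R_UniformSpace R_UniformSpace u t -> @continuous R_UniformSpace R_UniformSpace v t ->
  Ccont_real (fun s => (u s, v s)) t.
Proof.
  intros Hu Hv eps Heps.
  destruct (proj1 (filterlim_locally u (u t)) Hu (mkposreal (eps / 2) ltac:(lra))) as [d1 Hd1].
  destruct (proj1 (filterlim_locally v (v t)) Hv (mkposreal (eps / 2) ltac:(lra))) as [d2 Hd2].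
  exists (Rmin d1 d2). split; [apply Rmin_pos; apply cond_pos|]. intros s Hs.
  pose proof (Rmin_l d1 d2). pose proof (Rmin_r d1 d2).
  specialize (Hd1 s ltac:(change (Rabs (s - t) < d1); lra)).
  specialize (Hd2 s ltac:(change (Rabs (s - t) < d2); lra)).
  change (Rabs (u s - u t) < eps / 2) in Hd1. change (Rabs (v s - v t) < eps / 2) in Hd2.
  eapply Rle_lt_trans; [apply Cmod_le_Rabs_sum|]. simpl. unfold Rminus in *. lra.
Qed.

Lemma Ccont_real_mult (g1 g2 : R -> C) (t : R) :
  Ccont_real g1 t -> Ccont_real g2 t -> Ccont_real (fun s => g1 s * g2 s)%C t.
Proof.
  intros H1 H2 eps Heps.
  set (m1 := Cmod (g1 t)). set (m2 := Cmod (g2 t)).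
  assert (0 <= m1) by apply Cmod_ge_0. assert (0 <= m2) by apply Cmod_ge_0.
  set (e := Rmin 1 (eps / (2 * (m1 + m2 + 1)))).
  assert (He : 0 < e) by (apply Rmin_pos; [lra|apply Rdiv_lt_0_compat; lra]).
  assert (He1 : e <= 1) by apply Rmin_l. assert (He2 : e <= eps / (2 * (m1 + m2 + 1))) by apply Rmin_r.
  destruct (H1 e He) as [d1 [D1 Hd1]]. destruct (H2 e He) as [d2 [D2 Hd2]].
  exists (Rmin d1 d2). split; [apply Rmin_pos; auto|]. intros s Hs.
  pose proof (Rmin_l d1 d2). pose proof (Rmin_r d1 d2).
  specialize (Hd1 s ltac:(lra)). specialize (Hd2 s ltac:(lra)).
  replace (g1 s * g2 s - g1 t * g2 t)%C
    with ((g1 s - g1 t) * g2 s + g1 t * (g2 s - g2 t))%C by ring.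
  eapply Rle_lt_trans; [apply Cmod_triangle|]. rewrite !Cmod_mult.
  assert (Cmod (g2 s) <= m2 + 1).
  { replace (g2 s) with (g2 s - g2 t + g2 t)%C by ring.
    eapply Rle_trans; [apply Cmod_triangle|]. fold m2. lra. }
  pose proof (Cmod_ge_0 (g1 s - g1 t)). pose proof (Cmod_ge_0 (g2 s)).
  apply Rle_lt_trans with (e * (m2 + 1) + m1 * e).
  { apply Rplus_le_compat; [apply Rmult_le_compat; lra|apply Rmult_le_compat_l; lra]. }
  apply Rle_lt_trans with (eps / (2 * (m1 + m2 + 1)) * (m1 + m2 + 1)); [nra|].
  replace (eps / (2 * (m1 + m2 + 1)) * (m1 + m2 + 1)) with (eps / 2) by (field; lra). lra.
Qed.

Lemma Ccont_real_ext (g h : R -> C) (t : R) :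
  (exists del, 0 < del /\ forall s, Rabs (s - t) < del -> g s = h s) ->
  Ccont_real h t -> Ccont_real g t.
Proof.
  intros [d [Hd E]] Hc eps Heps. destruct (Hc eps Heps) as [d' [Hd' H]].
  exists (Rmin d d'). split; [apply Rmin_pos; auto|]. intros s Hs.
  pose proof (Rmin_l d d'). pose proof (Rmin_r d d').
  rewrite (E s ltac:(lra)), (E t ltac:(rewrite Rminus_diag, Rabs_R0; lra)). apply H. lra.
Qed.

Lemma ex_CInt_cont (g : R -> C) (a b : R) :
  (forall t, Rmin a b <= t <= Rmax a b -> Ccont_real g t) -> ex_CInt g a b.
Proof.
  intros Hc. apply (@ex_RInt_continuous C_R_CompleteNormedModule).
  intros t Ht. apply Ccont_real_continuous, Hc, Ht.
Qed.

Lemma CInt_bound (g : R -> C) (a b M : R) : a <= b -> ex_CInt g a b ->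
  (forall x, a <= x <= b -> Cmod (g x) <= M) -> Cmod (CInt g a b) <= (b - a) * M.
Proof.
  intros Hab Hex Hb. rewrite <- norm_C_R.
  apply (@norm_RInt_le C_R_NormedModule g (fun _ => M) a b); auto.
  - intros x Hx. rewrite norm_C_R. auto.
  - apply (@RInt_correct C_R_CompleteNormedModule), Hex.
  - apply (@is_RInt_const R_NormedModule).
Qed.

Lemma CInt_Chasles (g : R -> C) (a b c : R) : ex_CInt g a b -> ex_CInt g b c ->
  (CInt g a b + CInt g b c)%C = CInt g a c.
Proof. intros H1 H2. apply (@RInt_Chasles C_R_CompleteNormedModule); auto. Qed.

Lemma CInt_minus (f g : R -> C) (a b : R) : ex_CInt f a b -> ex_CInt g a b ->
  CInt (fun x => f x - g x)%C a b = (CInt f a b - CInt g a b)%C.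
Proof. intros H1 H2. apply (@RInt_minus C_R_CompleteNormedModule); auto. Qed.

Lemma CInt_const (c : C) (a b : R) : CInt (fun _ => c) a b = (RtoC (b - a) * c)%C.
Proof. unfold CInt. rewrite (@RInt_const C_R_CompleteNormedModule). apply scal_C_R. Qed.

Lemma CInt_ext (f g : R -> C) (a b : R) :
  (forall x, Rmin a b <= x <= Rmax a b -> f x = g x) -> CInt f a b = CInt g a b.
Proof. intros H. apply (@RInt_ext C_R_CompleteNormedModule). intros x Hx. apply H. lra. Qed.

Lemma CInt_swap (g : R -> C) (a b : R) : ex_CInt g b a -> CInt g a b = (- CInt g b a)%C.
Proof. intros H. unfold CInt. rewrite <- (@opp_RInt_swap C_R_CompleteNormedModule); auto. Qed.

(** * Contour integrals over rectangles *)

Definition in_rect (a b c d : R) (z : C) : Prop := a <= fst z <= b /\ c <= snd z <= d.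

Definition rect_cont (H : C -> C) (a b c d : R) : Prop :=
  forall z, in_rect a b c d z -> Ccont H z.

Definition hseg_cont (H : C -> C) (a b y : R) : Prop := forall x, a <= x <= b -> Ccont H (x, y).
Definition vseg_cont (H : C -> C) (c d x : R) : Prop := forall y, c <= y <= d -> Ccont H (x, y).

(* [H dz] integrated counterclockwise around [[a,b] x [c,d]]; [dz = i dy] on the vertical sides. *)
Definition rect_int (H : C -> C) (a b c d : R) : C :=
  (CInt (fun x => H (x, c)) a b - CInt (fun x => H (x, d)) a b
   + Ci * (CInt (fun y => H (b, y)) c d - CInt (fun y => H (a, y)) c d))%C.

Lemma rect_cont_hseg (H : C -> C) (a b c d y : R) :
  rect_cont H a b c d -> c <= y <= d -> hseg_cont H a b y.
Proof. intros Hc Hy x Hx. apply Hc. split; simpl; lra. Qed.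

Lemma rect_cont_vseg (H : C -> C) (a b c d x : R) :
  rect_cont H a b c d -> a <= x <= b -> vseg_cont H c d x.
Proof. intros Hc Hx y Hy. apply Hc. split; simpl; lra. Qed.

Lemma ex_CInt_hseg (H : C -> C) (a b y : R) :
  a <= b -> hseg_cont H a b y -> ex_CInt (fun x => H (x, y)) a b.
Proof.
  intros Hab Hc. apply ex_CInt_cont. intros t Ht. rewrite Rmin_left, Rmax_right in Ht by lra.
  apply (Ccont_real_comp H (fun s => (s, y))); [|apply Hc, Ht].
  intros s. eapply Rle_trans; [apply Cmod_le_Rabs_sum|]. simpl.
  rewrite Rplus_opp_r, Rabs_R0. unfold Rminus. lra.
Qed.

Lemma ex_CInt_vseg (H : C -> C) (c d x : R) :
  c <= d -> vseg_cont H c d x -> ex_CInt (fun y => H (x, y)) c d.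
Proof.
  intros Hcd Hc. apply ex_CInt_cont. intros t Ht. rewrite Rmin_left, Rmax_right in Ht by lra.
  apply (Ccont_real_comp H (fun s => (x, s))); [|apply Hc, Ht].
  intros s. eapply Rle_trans; [apply Cmod_le_Rabs_sum|]. simpl.
  rewrite Rplus_opp_r, Rabs_R0. unfold Rminus. lra.
Qed.

Lemma rect_int_split_x (H : C -> C) (a e b c d : R) : a <= e <= b ->
  hseg_cont H a b c -> hseg_cont H a b d ->
  rect_int H a b c d = (rect_int H a e c d + rect_int H e b c d)%C.
Proof.
  intros He Hc Hd. unfold rect_int.
  rewrite <- (CInt_Chasles (fun x => H (x, c)) a e b)
    by (apply ex_CInt_hseg; [lra|intros x Hx; apply Hc; lra]).
  rewrite <- (CInt_Chasles (fun x => H (x, d)) a e b)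
    by (apply ex_CInt_hseg; [lra|intros x Hx; apply Hd; lra]).
  ring.
Qed.

Lemma rect_int_split_y (H : C -> C) (a b c e d : R) : c <= e <= d ->
  vseg_cont H c d a -> vseg_cont H c d b ->
  rect_int H a b c d = (rect_int H a b c e + rect_int H a b e d)%C.
Proof.
  intros He Ha Hb. unfold rect_int.
  rewrite <- (CInt_Chasles (fun y => H (b, y)) c e d)
    by (apply ex_CInt_vseg; [lra|intros y Hy; apply Hb; lra]).
  rewrite <- (CInt_Chasles (fun y => H (a, y)) c e d)
    by (apply ex_CInt_vseg; [lra|intros y Hy; apply Ha; lra]).
  ring.
Qed.

Lemma rect_int_quarters (H : C -> C) (a e b c f d : R) : a <= e <= b -> c <= f <= d ->
  rect_cont H a b c d ->
  rect_int H a b c d =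
    (rect_int H a e c f + rect_int H e b c f + rect_int H a e f d + rect_int H e b f d)%C.
Proof.
  intros He Hf Hc.
  rewrite (rect_int_split_x H a e b c d) by (auto; apply (rect_cont_hseg H a b c d); auto; lra).
  rewrite (rect_int_split_y H a e c f d), (rect_int_split_y H e b c f d);
    try (apply (rect_cont_vseg H a b c d); auto; lra); try lra.
  ring.
Qed.

Lemma rect_int_minus (H A : C -> C) (a b c d : R) : a <= b -> c <= d ->
  rect_cont H a b c d -> rect_cont A a b c d ->
  rect_int (fun z => H z - A z)%C a b c d = (rect_int H a b c d - rect_int A a b c d)%C.
Proof.
  intros Hab Hcd HH HA. unfold rect_int.
  rewrite (CInt_minus (fun x => H (x, c)) (fun x => A (x, c))),
    (CInt_minus (fun x => H (x, d)) (fun x => A (x, d)))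
    by (apply ex_CInt_hseg; [lra|apply rect_cont_hseg with c d; auto; lra]).
  rewrite (CInt_minus (fun y => H (b, y)) (fun y => A (b, y))),
    (CInt_minus (fun y => H (a, y)) (fun y => A (a, y)))
    by (apply ex_CInt_vseg; [lra|apply rect_cont_vseg with a b; auto; lra]).
  ring.
Qed.

Lemma Ccont_affine (al l z0 z : C) : Ccont (fun w => al + l * (w - z0))%C z.
Proof.
  intros eps Heps. pose proof (Cmod_ge_0 l).
  exists (eps / (Cmod l + 1)). split; [apply Rdiv_lt_0_compat; lra|].
  intros w Hw. replace (al + l * (w - z0) - (al + l * (z - z0)))%C with (l * (w - z))%C by ring.
  rewrite Cmod_mult. pose proof (Cmod_ge_0 (w - z)).
  apply Rle_lt_trans with ((Cmod l + 1) * Cmod (w - z)); [nra|].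
  apply Rlt_le_trans with ((Cmod l + 1) * (eps / (Cmod l + 1))); [apply Rmult_lt_compat_l; lra|].
  right; field; lra.
Qed.

Lemma Ccont_minus (H A : C -> C) (z : C) : Ccont H z -> Ccont A z -> Ccont (fun w => H w - A w)%C z.
Proof.
  intros H1 H2 eps Heps.
  destruct (H1 (eps / 2) ltac:(lra)) as [d1 [? Hd1]]. destruct (H2 (eps / 2) ltac:(lra)) as [d2 [? Hd2]].
  exists (Rmin d1 d2). split; [apply Rmin_pos; auto|]. intros w Hw.
  pose proof (Rmin_l d1 d2). pose proof (Rmin_r d1 d2).
  specialize (Hd1 w ltac:(lra)). specialize (Hd2 w ltac:(lra)).
  replace (H w - A w - (H z - A z))%C with (H w - H z + - (A w - A z))%C by ring.
  eapply Rle_lt_trans; [apply Cmod_triangle|]. rewrite Cmod_opp. lra.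
Qed.

Lemma rect_int_affine (al l z0 : C) (a b c d : R) : a <= b -> c <= d ->
  rect_int (fun w => al + l * (w - z0))%C a b c d = 0%C.
Proof.
  intros Hab Hcd. set (A := fun w => (al + l * (w - z0))%C).
  assert (HA : rect_cont A a b c d) by (intros z _; apply Ccont_affine).
  unfold rect_int.
  rewrite <- (CInt_minus (fun x => A (x, c)) (fun x => A (x, d)))
    by (apply ex_CInt_hseg; [lra|apply rect_cont_hseg with c d; auto; lra]).
  rewrite <- (CInt_minus (fun y => A (b, y)) (fun y => A (a, y)))
    by (apply ex_CInt_vseg; [lra|apply rect_cont_vseg with a b; auto; lra]).
  rewrite (CInt_ext _ (fun _ => l * (0, (c - d)%R))%C),
    (CInt_ext (fun y => A (b, y) - A (a, y))%C (fun _ => l * ((b - a)%R, 0))%C), !CInt_const.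
  - destruct l. unfold Cminus, Cplus, Cmult, Copp, RtoC, Ci; simpl. f_equal; ring.
  - intros x _. unfold A. destruct l, z0, al. unfold Cminus, Cplus, Cmult, Copp; simpl. f_equal; ring.
  - intros x _. unfold A. destruct l, z0, al. unfold Cminus, Cplus, Cmult, Copp; simpl. f_equal; ring.
Qed.

Lemma rect_int_bound (H : C -> C) (a b c d M : R) : a <= b -> c <= d ->
  hseg_cont H a b c -> hseg_cont H a b d -> vseg_cont H c d a -> vseg_cont H c d b ->
  (forall x, a <= x <= b -> Cmod (H (x, c)) <= M /\ Cmod (H (x, d)) <= M) ->
  (forall y, c <= y <= d -> Cmod (H (a, y)) <= M /\ Cmod (H (b, y)) <= M) ->
  Cmod (rect_int H a b c d) <= 2 * (b - a) * M + 2 * (d - c) * M.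
Proof.
  intros Hab Hcd Hc Hd Ha Hb M1 M2. unfold rect_int.
  assert (B1 : Cmod (CInt (fun x => H (x, c)) a b) <= (b - a) * M)
    by (apply CInt_bound; [lra|apply ex_CInt_hseg; auto|intros; apply M1; auto]).
  assert (B2 : Cmod (CInt (fun x => H (x, d)) a b) <= (b - a) * M)
    by (apply CInt_bound; [lra|apply ex_CInt_hseg; auto|intros; apply M1; auto]).
  assert (B3 : Cmod (CInt (fun y => H (a, y)) c d) <= (d - c) * M)
    by (apply CInt_bound; [lra|apply ex_CInt_vseg; auto|intros; apply M2; auto]).
  assert (B4 : Cmod (CInt (fun y => H (b, y)) c d) <= (d - c) * M)
    by (apply CInt_bound; [lra|apply ex_CInt_vseg; auto|intros; apply M2; auto]).
  eapply Rle_trans; [apply Cmod_triangle|]. rewrite Cmod_mult, Cmod_Ci, Rmult_1_l.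
  unfold Cminus.
  pose proof (Cmod_triangle (CInt (fun x => H (x, c)) a b) (- CInt (fun x => H (x, d)) a b)).
  pose proof (Cmod_triangle (CInt (fun y => H (b, y)) c d) (- CInt (fun y => H (a, y)) c d)).
  rewrite Cmod_opp in *. lra.
Qed.

(* Subtracting the tangent map, whose contour integral vanishes, leaves an integrand of size
   [eps ((b - a) + (d - c))]. *)
Lemma rect_int_local_bound (H : C -> C) (z0 l : C) (a b c d eps del : R) :
  a <= b -> c <= d -> in_rect a b c d z0 -> rect_cont H a b c d -> 0 <= eps ->
  (forall w, Cmod (w - z0) < del -> Cmod (H w - H z0 - l * (w - z0)) <= eps * Cmod (w - z0)) ->
  (b - a) + (d - c) < del ->
  Cmod (rect_int H a b c d) <= 2 * eps * ((b - a) + (d - c)) ^ 2.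
Proof.
  intros Hab Hcd [Hx0 Hy0] Hc Heps Hd Hsize.
  set (A := fun z => (H z0 + l * (z - z0))%C).
  assert (HA : rect_cont A a b c d) by (intros z _; apply Ccont_affine).
  replace (rect_int H a b c d) with (rect_int (fun z => H z - A z)%C a b c d)
    by (rewrite rect_int_minus by auto; unfold A; rewrite rect_int_affine by auto; ring).
  assert (Hsmall : forall z, in_rect a b c d z -> Cmod (H z - A z) <= eps * ((b - a) + (d - c))).
  { intros z [Hzx Hzy].
    assert (Hdist : Cmod (z - z0) <= (b - a) + (d - c)).
    { eapply Rle_trans; [apply Cmod_le_Rabs_sum|]. destruct z as [zx zy], z0 as [x0 y0]. simpl in *.
      apply Rplus_le_compat; apply Rabs_le; lra. }
    unfold A. replace (H z - (H z0 + l * (z - z0)))%C with (H z - H z0 - l * (z - z0))%C by ring.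
    eapply Rle_trans; [apply Hd; lra|]. apply Rmult_le_compat_l; lra. }
  assert (HcA : rect_cont (fun z => H z - A z)%C a b c d) by (intros z Hz; apply Ccont_minus; auto).
  eapply Rle_trans.
  - apply rect_int_bound with (M := eps * ((b - a) + (d - c))); auto;
      try (apply rect_cont_hseg with c d; auto; lra); try (apply rect_cont_vseg with a b; auto; lra);
      intros t Ht; split; apply Hsmall; split; simpl; lra.
  - right. ring.
Qed.

(** * Goursat's theorem for rectangles *)

Lemma nested_intervals (l u : nat -> R) :
  (forall n, l n <= l (S n)) -> (forall n, u (S n) <= u n) -> (forall n, l n <= u n) ->
  exists x, forall n, l n <= x <= u n.
Proof.
  intros Hl Hu Hlu.
  assert (Hmono : forall n k, l n <= l (k + n)%nat /\ u (k + n)%nat <= u n).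
  { intros n k. induction k as [|k IH]; simpl; [lra|]. pose proof (Hl (k + n)%nat). pose proof (Hu (k + n)%nat). lra. }
  assert (Hlu' : forall m n, l m <= u n).
  { intros m n. destruct (Nat.le_ge_cases m n) as [Hmn|Hmn].
    - replace n with ((n - m) + m)%nat by lia. pose proof (Hmono m (n - m)%nat). pose proof (Hlu ((n - m) + m)%nat). lra.
    - replace m with ((m - n) + n)%nat by lia. pose proof (Hmono n (m - n)%nat). pose proof (Hlu ((m - n) + n)%nat). lra. }
  destruct (completeness (fun x => exists n, x = l n)) as [x [Hub Hlub]].
  - exists (u O). intros y [n ->]. apply Hlu'.
  - exists (l O), O. reflexivity.
  - exists x. intros n. split; [apply Hub; exists n; reflexivity|].
    apply Hlub. intros y [m ->]. apply Hlu'.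
Qed.

Lemma exists_pow2_gt (K : R) : exists n, K < 2 ^ n.
Proof.
  destruct (Pow_x_infinity 2 ltac:(rewrite Rabs_right; lra) (K + 1)) as [n Hn].
  exists n. specialize (Hn n (le_n n)). rewrite Rabs_right in Hn by (left; apply pow_lt; lra). lra.
Qed.

Lemma Cmod_sum4_quarter (z1 z2 z3 z4 : C) :
  Cmod z1 < Cmod (z1 + z2 + z3 + z4) / 4 -> Cmod z2 < Cmod (z1 + z2 + z3 + z4) / 4 ->
  Cmod z3 < Cmod (z1 + z2 + z3 + z4) / 4 -> Cmod (z1 + z2 + z3 + z4) / 4 <= Cmod z4.
Proof.
  intros H1 H2 H3. pose proof (Cmod_triangle (z1 + z2 + z3) z4).
  pose proof (Cmod_triangle (z1 + z2) z3). pose proof (Cmod_triangle z1 z2). lra.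
Qed.

Section Goursat.

Variables (H : C -> C) (a b c d : R).
Hypotheses (Hab : a <= b) (Hcd : c <= d) (Hder : forall z, in_rect a b c d z -> Cderivable H z).

Let w := b - a.
Let h := d - c.

Let sub_int (n : nat) (p : R * R) : C :=
  rect_int H (fst p) (fst p + w / 2 ^ n) (snd p) (snd p + h / 2 ^ n).

(* Bisection step: keep a quarter carrying at least a quarter of the integral. *)
Let quarter_step (n : nat) (p : R * R) : R * R :=
  let x := fst p in let y := snd p in let dx := w / 2 ^ S n in let dy := h / 2 ^ S n in
  let big q := Rle_dec (Cmod (sub_int n p) / 4) (Cmod (sub_int (S n) q)) in
  if big (x, y) then (x, y) else if big (x + dx, y) then (x + dx, y)
  else if big (x, y + dy) then (x, y + dy) else (x + dx, y + dy).

Let corner : nat -> R * R := fix corner n := match n with O => (a, c) | S n => quarter_step n (corner n) end.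

Let w_pos (n : nat) : 0 <= w / 2 ^ n.
Proof. apply Rdiv_le_0_compat; [unfold w; lra|apply pow_lt; lra]. Qed.

Let h_pos (n : nat) : 0 <= h / 2 ^ n.
Proof. apply Rdiv_le_0_compat; [unfold h; lra|apply pow_lt; lra]. Qed.

Let half_size (s : R) (n : nat) : s / 2 ^ n = s / 2 ^ S n + s / 2 ^ S n.
Proof. simpl. field. apply pow_nonzero. lra. Qed.

Let quarter_step_nested (n : nat) (p : R * R) :
  fst p <= fst (quarter_step n p) /\ fst (quarter_step n p) + w / 2 ^ S n <= fst p + w / 2 ^ n /\
  snd p <= snd (quarter_step n p) /\ snd (quarter_step n p) + h / 2 ^ S n <= snd p + h / 2 ^ n.
Proof.
  rewrite (half_size w n), (half_size h n). pose proof (w_pos (S n)). pose proof (h_pos (S n)).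
  unfold quarter_step; cbv zeta. repeat destruct Rle_dec; cbn [fst snd]; lra.
Qed.

Let corner_nested (n : nat) :
  fst (corner n) <= fst (corner (S n)) /\ fst (corner (S n)) + w / 2 ^ S n <= fst (corner n) + w / 2 ^ n /\
  snd (corner n) <= snd (corner (S n)) /\ snd (corner (S n)) + h / 2 ^ S n <= snd (corner n) + h / 2 ^ n.
Proof. apply quarter_step_nested. Qed.

Let corner_in_rect (n : nat) :
  a <= fst (corner n) /\ fst (corner n) + w / 2 ^ n <= b /\ c <= snd (corner n) /\ snd (corner n) + h / 2 ^ n <= d.
Proof.
  induction n as [|n IH].
  - simpl. unfold w, h. repeat split; try lra; right; field.
  - pose proof (corner_nested n). lra.
Qed.

Let corner_cont (n : nat) :
  rect_cont H (fst (corner n)) (fst (corner n) + w / 2 ^ n) (snd (corner n)) (snd (corner n) + h / 2 ^ n).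
Proof.
  intros z Hz. apply Cderivable_cont, Hder. pose proof (corner_in_rect n).
  destruct Hz. split; lra.
Qed.

Let corner_growth (n : nat) : Cmod (rect_int H a b c d) <= 4 ^ n * Cmod (sub_int n (corner n)).
Proof.
  induction n as [|n IH].
  - unfold sub_int. simpl. unfold w, h. replace (a + (b - a) / 1) with b by field.
    replace (c + (d - c) / 1) with d by field. lra.
  - enough (Cmod (sub_int n (corner n)) / 4 <= Cmod (sub_int (S n) (corner (S n))))
      by (pose proof (pow_lt 4 n ltac:(lra)); change (4 ^ S n) with (4 * 4 ^ n); nra).
    simpl corner. set (p := corner n).
    set (x := fst p). set (y := snd p). set (dx := w / 2 ^ S n). set (dy := h / 2 ^ S n).
    set (s1 := sub_int (S n) (x, y)). set (s2 := sub_int (S n) (x + dx, y)).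
    set (s3 := sub_int (S n) (x, y + dy)). set (s4 := sub_int (S n) (x + dx, y + dy)).
    assert (Hsplit : sub_int n p = (s1 + s2 + s3 + s4)%C).
    { assert (0 <= dx) by apply w_pos. assert (0 <= dy) by apply h_pos.
      pose proof (corner_cont n) as Hc. fold p in Hc.
      unfold s1, s2, s3, s4, sub_int in Hc |- *. cbn [fst snd] in Hc |- *. fold x y dx dy in Hc |- *.
      rewrite (half_size w n), (half_size h n) in Hc |- *. fold dx dy in Hc |- *.
      replace (x + (dx + dx)) with (x + dx + dx) in Hc |- * by ring.
      replace (y + (dy + dy)) with (y + dy + dy) in Hc |- * by ring.
      apply rect_int_quarters; auto; lra. }
    unfold quarter_step; cbv zeta. fold x y dx dy s1 s2 s3 s4.
    rewrite Hsplit. repeat (destruct Rle_dec; [assumption|]).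
    apply (Cmod_sum4_quarter s1 s2 s3 s4); lra.
Qed.

Theorem goursat : rect_int H a b c d = 0%C.
Proof.
  assert (Hx : exists xs, forall n, fst (corner n) <= xs <= fst (corner n) + w / 2 ^ n).
  { apply nested_intervals; intros n; pose proof (corner_nested n); pose proof (w_pos n); lra. }
  assert (Hy : exists ys, forall n, snd (corner n) <= ys <= snd (corner n) + h / 2 ^ n).
  { apply nested_intervals; intros n; pose proof (corner_nested n); pose proof (h_pos n); lra. }
  destruct Hx as [xs Hxs], Hy as [ys Hys].
  assert (Hzs : in_rect a b c d (xs, ys)).
  { pose proof (Hxs O). pose proof (Hys O). pose proof (corner_in_rect O). split; simpl in *; lra. }
  destruct (Hder _ Hzs) as [l Hl].
  apply Cmod_eq_0, Rle_antisym; [|apply Cmod_ge_0]. apply le_epsilon. intros e He.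
  set (eps := e / (2 * (w + h) ^ 2 + 1)).
  assert (Heps : 0 < eps) by (apply Rdiv_lt_0_compat; [lra|pose proof (pow2_ge_0 (w + h)); lra]).
  destruct (Hl eps Heps) as [del [Hdel Hdd]].
  destruct (exists_pow2_gt ((w + h) / del)) as [n Hn].
  assert (H2n : 0 < 2 ^ n) by (apply pow_lt; lra).
  assert (Hsize : w / 2 ^ n + h / 2 ^ n < del).
  { replace (w / 2 ^ n + h / 2 ^ n) with ((w + h) / del * (del / 2 ^ n)) by (field; lra).
    apply Rlt_le_trans with (2 ^ n * (del / 2 ^ n)); [|right; field; lra].
    apply Rmult_lt_compat_r; [apply Rdiv_lt_0_compat|]; lra. }
  assert (Hloc : Cmod (sub_int n (corner n)) <= 2 * eps * ((w + h) / 2 ^ n) ^ 2).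
  { replace ((w + h) / 2 ^ n) with
      (fst (corner n) + w / 2 ^ n - fst (corner n) + (snd (corner n) + h / 2 ^ n - snd (corner n)))
      by (field; lra).
    pose proof (w_pos n). pose proof (h_pos n).
    apply rect_int_local_bound with (xs, ys) l del; auto; try lra.
    split; [apply Hxs|apply Hys]. }
  pose proof (corner_growth n) as Hg.
  assert (E4 : 4 ^ n = 2 ^ n * 2 ^ n) by (rewrite <- Rpow_mult_distr; f_equal; lra).
  apply Rle_trans with (2 * eps * (w + h) ^ 2).
  - eapply Rle_trans; [exact Hg|]. rewrite E4.
    apply Rle_trans with (2 ^ n * 2 ^ n * (2 * eps * ((w + h) / 2 ^ n) ^ 2)); [apply Rmult_le_compat_l; nra|].
    right. field. lra.
  - unfold eps. apply Rle_trans with e; [|lra].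
    pose proof (pow2_ge_0 (w + h)).
    apply Rle_trans with (e * (2 * (w + h) ^ 2) / (2 * (w + h) ^ 2 + 1)); [right; field; lra|].
    apply Rmult_le_reg_r with (2 * (w + h) ^ 2 + 1); [lra|]. field_simplify; nra.
Qed.

End Goursat.

Lemma Rle_0_of_forall_small (X M r : R) : 0 < r ->
  (forall del, 0 < del < r -> X <= del * M) -> X <= 0.
Proof.
  intros Hr H. apply le_epsilon. intros e He. pose proof (Rabs_pos M).
  assert (Hex : exists del, 0 < del < r /\ del * (Rabs M + 1) <= e).
  { exists (Rmin (r / 2) (e / (Rabs M + 1))).
    pose proof (Rmin_l (r / 2) (e / (Rabs M + 1))). pose proof (Rmin_r (r / 2) (e / (Rabs M + 1))).
    split; [split; [apply Rmin_glb_lt; [lra|apply Rdiv_lt_0_compat; lra]|lra]|].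
    apply Rle_trans with (e / (Rabs M + 1) * (Rabs M + 1)); [apply Rmult_le_compat_r; lra|].
    right. field. lra. }
  destruct Hex as [del [Hdel Hdel2]].
  eapply Rle_trans; [apply H, Hdel|]. pose proof (Rle_abs M). nra.
Qed.

Section Punctured.

Variables (H : C -> C) (x0 y0 : R).

Let neq_of_fst (z : C) : fst z <> x0 -> z <> (x0, y0).
Proof. intros Hz E. apply Hz. rewrite E. reflexivity. Qed.

Let neq_of_snd (z : C) : snd z <> y0 -> z <> (x0, y0).
Proof. intros Hz E. apply Hz. rewrite E. reflexivity. Qed.

Lemma rect_int_excise (a e1 e2 b c f1 f2 d : R) :
  a <= e1 < x0 -> x0 < e2 <= b -> c <= f1 < y0 -> y0 < f2 <= d ->
  (forall z, in_rect a b c d z -> z <> (x0, y0) -> Cderivable H z) ->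
  rect_int H a b c d = rect_int H e1 e2 f1 f2.
Proof.
  intros He1 He2 Hf1 Hf2 Hd.
  assert (Hc : forall z, in_rect a b c d z -> z <> (x0, y0) -> Ccont H z)
    by (intros z Hz Hne; apply Cderivable_cont, Hd; auto).
  assert (Hh : forall y, c <= y <= d -> y <> y0 -> hseg_cont H a b y)
    by (intros y Hy Hne x Hx; apply Hc; [split; simpl; lra|apply neq_of_snd; simpl; auto]).
  assert (Hv : forall x, a <= x <= b -> x <> x0 -> vseg_cont H c d x)
    by (intros x Hx Hne y Hy; apply Hc; [split; simpl; lra|apply neq_of_fst; simpl; auto]).
  assert (Hgoursat : forall a' b' c' d', a <= a' <= b' -> b' <= b -> c <= c' <= d' -> d' <= d ->
            (b' < x0 \/ x0 < a' \/ d' < y0 \/ y0 < c') -> rect_int H a' b' c' d' = 0%C).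
  { intros a' b' c' d' ? ? ? ? Hout. apply goursat; try lra.
    intros z [Hzx Hzy]. apply Hd; [split; lra|].
    destruct Hout as [?|[?|[?|?]]]; [apply neq_of_fst|apply neq_of_fst|apply neq_of_snd|apply neq_of_snd]; lra. }
  rewrite (rect_int_split_x H a e1 b c d), (rect_int_split_x H e1 e2 b c d),
    (Hgoursat a e1 c d), (Hgoursat e2 b c d); try lra;
    try (apply Hh; lra); try (intros x Hx; apply (Hh c); lra); try (intros x Hx; apply (Hh d); lra).
  rewrite (rect_int_split_y H e1 e2 c f1 d), (rect_int_split_y H e1 e2 f1 f2 d),
    (Hgoursat e1 e2 c f1), (Hgoursat e1 e2 f2 d); try lra;
    try (intros y Hy; apply (Hv e1); lra); try (intros y Hy; apply (Hv e2); lra).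
  ring.
Qed.

Lemma rect_int_punctured_le (a b c d M d0 del : R) : 0 <= M -> 0 < del -> del < d0 / 4 ->
  a < x0 - del -> x0 + del < b -> c < y0 - del -> y0 + del < d ->
  (forall z, in_rect a b c d z -> z <> (x0, y0) -> Cderivable H z) ->
  (forall z, in_rect a b c d z -> z <> (x0, y0) -> Cmod (z - (x0, y0)) < d0 -> Cmod (H z) <= M) ->
  Cmod (rect_int H a b c d) <= 8 * del * M.
Proof.
  intros HM0 Hdel Hd1 Ha Hb Hc Hd' Hd HM.
  rewrite (rect_int_excise a (x0 - del) (x0 + del) b c (y0 - del) (y0 + del) d) by (auto; lra).
  assert (Hon : forall z, x0 - del <= fst z <= x0 + del -> y0 - del <= snd z <= y0 + del ->
                  (fst z <> x0 \/ snd z <> y0) -> Ccont H z /\ Cmod (H z) <= M).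
  { intros z Hzx Hzy Hne. assert (Hz : in_rect a b c d z) by (split; lra).
    assert (Hzn : z <> (x0, y0)) by (destruct Hne; [apply neq_of_fst|apply neq_of_snd]; auto).
    split; [apply Cderivable_cont, Hd; auto|]. apply HM; auto.
    eapply Rle_lt_trans; [apply Cmod_le_Rabs_sum|]. destruct z as [zx zy]. simpl in *.
    assert (Rabs (zx + - x0) <= del) by (apply Rabs_le; lra).
    assert (Rabs (zy + - y0) <= del) by (apply Rabs_le; lra). lra. }
  replace (8 * del * M) with (2 * (x0 + del - (x0 - del)) * M + 2 * (y0 + del - (y0 - del)) * M) by ring.
  apply rect_int_bound; try lra; try (intros t Ht; apply Hon; simpl; lra);
    intros t Ht; split; apply Hon; simpl; lra.
Qed.

Theorem goursat_punctured (a b c d M d0 : R) :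
  a < x0 < b -> c < y0 < d -> 0 < d0 ->
  (forall z, in_rect a b c d z -> z <> (x0, y0) -> Cderivable H z) ->
  (forall z, in_rect a b c d z -> z <> (x0, y0) -> Cmod (z - (x0, y0)) < d0 -> Cmod (H z) <= M) ->
  rect_int H a b c d = 0%C.
Proof.
  intros Hx Hy Hd0 Hd HM. apply Cmod_eq_0, Rle_antisym; [|apply Cmod_ge_0].
  pose proof (Rmin_l (x0 - a) (b - x0)). pose proof (Rmin_r (x0 - a) (b - x0)).
  pose proof (Rmin_l (y0 - c) (d - y0)). pose proof (Rmin_r (y0 - c) (d - y0)).
  pose proof (Rmin_l (d0 / 4) (Rmin (x0 - a) (b - x0))). pose proof (Rmin_r (d0 / 4) (Rmin (x0 - a) (b - x0))).
  pose proof (Rmin_l (Rmin (d0 / 4) (Rmin (x0 - a) (b - x0))) (Rmin (y0 - c) (d - y0))).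
  pose proof (Rmin_r (Rmin (d0 / 4) (Rmin (x0 - a) (b - x0))) (Rmin (y0 - c) (d - y0))).
  apply (Rle_0_of_forall_small _ (8 * Rmax M 0) (Rmin (Rmin (d0 / 4) (Rmin (x0 - a) (b - x0))) (Rmin (y0 - c) (d - y0)))).
  - repeat apply Rmin_glb_lt; lra.
  - intros del Hdel. rewrite <- Rmult_assoc, (Rmult_comm del 8).
    apply rect_int_punctured_le with d0; auto; try lra; [apply Rmax_r|].
    intros z Hz Hne Hz0. apply Rle_trans with M; [apply HM; auto|apply Rmax_l].
Qed.

End Punctured.

(** * A periodic Cauchy kernel *)

Definition two_pi_i : C := (0, 2 * PI).

Definition e2pi (w : C) : C := Cexp (two_pi_i * w).

(* [2 pi i / (e^(2 pi i (z - z0)) - 1)]: 1-periodic in [z], with a simple pole of residue 1 at [z0]. *)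
Definition per_kernel (z0 z : C) : C := (two_pi_i * / (e2pi (z - z0) - 1))%C.

Lemma Cmod_two_pi_i : Cmod two_pi_i = 2 * PI.
Proof. unfold two_pi_i. rewrite Cmod_imag; [reflexivity|pose proof PI_RGT_0; lra]. Qed.

Lemma Cmod_e2pi (w : C) : Cmod (e2pi w) = exp (- (2 * PI) * snd w).
Proof. unfold e2pi. rewrite Cmod_Cexp. f_equal. destruct w; unfold two_pi_i, Cmult; simpl. ring. Qed.

Lemma sub_1_neq_0 (u : C) : u <> 1%C -> (u - 1)%C <> 0%C.
Proof. intros Hu E. apply Hu. replace u with (u - 1 + 1)%C by ring. rewrite E. ring. Qed.

Lemma e2pi_neq_1 (w : C) : Rabs (fst w) <= /2 -> w <> 0%C -> e2pi w <> 1%C.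
Proof.
  intros Hx Hne E. destruct w as [x y]. simpl in Hx. pose proof PI2_3_2.
  pose proof (Cmod_e2pi (x, y)) as Hmod. rewrite E, Cmod_1 in Hmod. simpl in Hmod.
  assert (Hy : y = 0) by (rewrite <- exp_0 in Hmod; apply exp_inv in Hmod; nra).
  subst y. unfold e2pi, Cexp, two_pi_i, Cmult in E; simpl in E. injection E as Ecos _.
  replace (0 * x - 2 * PI * 0) with 0 in Ecos by ring. rewrite exp_0, Rmult_1_l in Ecos.
  replace (0 * 0 + 2 * PI * x) with (2 * PI * x) in Ecos by ring.
  assert (Hx0 : x <> 0) by (intros ->; apply Hne; reflexivity).
  assert (Hpos : 0 < Rabs (2 * PI * x) <= PI).
  { rewrite Rabs_mult, (Rabs_right (2 * PI)) by lra. split; [apply Rmult_lt_0_compat; [lra|apply Rabs_pos_lt, Hx0]|nra]. }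
  assert (cos (2 * PI * x) < 1).
  { destruct (Rle_dec 0 (2 * PI * x)).
    - rewrite Rabs_right in Hpos by lra. rewrite <- cos_0. apply cos_decreasing_1; lra.
    - rewrite Rabs_left in Hpos by lra. rewrite <- cos_neg, <- cos_0. apply cos_decreasing_1; lra. }
  lra.
Qed.

Lemma per_kernel_shift (z0 : C) (x y : R) : per_kernel z0 (x + 1, y) = per_kernel z0 (x, y).
Proof.
  unfold per_kernel, e2pi. do 3 f_equal. rewrite <- (Cexp_2PI_i (Cmult two_pi_i (Cminus (x, y) z0))). f_equal.
  destruct z0; unfold two_pi_i, Cmult, Cplus, Cminus, Copp; simpl. f_equal; ring.
Qed.

Lemma per_kernel_Cderivable (z0 z : C) : e2pi (z - z0) <> 1%C -> Cderivable (per_kernel z0) z.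
Proof.
  intros Hne. unfold per_kernel. apply Cderivable_mult; [apply Cderivable_const|].
  apply (Cderivable_comp Cinv (fun w => e2pi (w - z0) - 1)%C).
  - apply Cderivable_minus; [|apply Cderivable_const].
    apply (Cderivable_comp Cexp (fun w => two_pi_i * (w - z0))%C); [|apply Cderivable_Cexp].
    apply Cderivable_mult; [apply Cderivable_const|].
    apply Cderivable_minus; [apply Cderivable_id|apply Cderivable_const].
  - apply Cderivable_Cinv, sub_1_neq_0, Hne.
Qed.

Lemma Cmod_per_kernel (z0 z : C) : e2pi (z - z0) <> 1%C ->
  Cmod (per_kernel z0 z) = 2 * PI / Cmod (e2pi (z - z0) - 1).
Proof.
  intros Hne. unfold per_kernel. rewrite Cmod_mult, Cmod_two_pi_i, Cmod_inv by (apply sub_1_neq_0, Hne).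
  reflexivity.
Qed.

Lemma Cmod_per_kernel_add (z0 z : C) : e2pi (z - z0) <> 1%C ->
  Cmod (per_kernel z0 z + two_pi_i) = 2 * PI * Cmod (e2pi (z - z0)) / Cmod (e2pi (z - z0) - 1).
Proof.
  intros Hne. pose proof (sub_1_neq_0 _ Hne).
  replace (per_kernel z0 z + two_pi_i)%C with (two_pi_i * e2pi (z - z0) * / (e2pi (z - z0) - 1))%C
    by (unfold per_kernel; field; auto).
  rewrite !Cmod_mult, Cmod_two_pi_i, Cmod_inv by auto. reflexivity.
Qed.

(* [f(z) - f(z0)] cancels the pole of the kernel. *)
Lemma per_kernel_removable (f : C -> C) (z0 : C) : Cderivable f z0 ->
  exists M d0, 0 < d0 /\ forall z, z <> z0 -> Cmod (z - z0) < d0 ->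
    e2pi (z - z0) <> 1%C /\ Cmod ((f z - f z0) * per_kernel z0 z) <= M.
Proof.
  intros [l0 Hd]. destruct (Hd 1 Rlt_0_1) as [d1 [Hd1 Hdd]]. pose proof PI2_3_2.
  exists (2 * (Cmod l0 + 1)), (Rmin d1 (/ (32 * PI))).
  split; [apply Rmin_pos; [lra|apply Rinv_0_lt_compat; lra]|].
  intros z Hne Hz. pose proof (Rmin_l d1 (/ (32 * PI))). pose proof (Rmin_r d1 (/ (32 * PI))).
  assert (Hh : 0 < Cmod (z - z0)) by (apply Cmod_gt_0; intro E; apply Hne;
    replace z with (z - z0 + z0)%C by ring; rewrite E; ring).
  set (h := Cmod (z - z0)) in *. set (u := (two_pi_i * (z - z0))%C).
  assert (Hu : Cmod u = 2 * PI * h) by (unfold u; rewrite Cmod_mult, Cmod_two_pi_i; reflexivity).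
  assert (Hu1 : Cmod u <= / 16).
  { rewrite Hu. apply Rle_trans with (2 * PI * / (32 * PI)); [apply Rmult_le_compat_l; lra|right; field; lra]. }
  (* [|e^u - 1| >= |u|/2] since [e^u - 1 - u] is quadratically small *)
  assert (HE : Cmod u / 2 <= Cmod (Cexp u - 1)).
  { pose proof (Cexp_sub_1_sub_bound u ltac:(lra)) as Hr. pose proof (Cmod_ge_0 u).
    pose proof (Cmod_sub_ge u (u - (Cexp u - 1))) as Htri.
    replace (u - (u - (Cexp u - 1)))%C with (Cexp u - 1)%C in Htri by ring.
    replace (u - (Cexp u - 1))%C with (- (Cexp u - 1 - u))%C in Htri by ring. rewrite Cmod_opp in Htri.
    assert (8 * Cmod u ^ 2 <= Cmod u / 2) by nra. lra. }
  assert (Hne1 : e2pi (z - z0) <> 1%C).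
  { intro E. unfold e2pi in E. fold u in E. rewrite E in HE.
    replace (1 - 1)%C with (RtoC 0) in HE by ring. rewrite Cmod_0 in HE. nra. }
  split; [exact Hne1|]. rewrite Cmod_mult, Cmod_per_kernel by exact Hne1. unfold e2pi. fold u.
  assert (Hf : Cmod (f z - f z0) <= (Cmod l0 + 1) * h).
  { specialize (Hdd z ltac:(fold h; lra)). fold h in Hdd.
    pose proof (Cmod_triangle (f z - f z0 - l0 * (z - z0)) (l0 * (z - z0))) as Htri.
    replace (f z - f z0 - l0 * (z - z0) + l0 * (z - z0))%C with (f z - f z0)%C in Htri by ring.
    rewrite Cmod_mult in Htri. fold h in Htri. lra. }
  assert (HL : 2 * PI / Cmod (Cexp u - 1) <= 2 / h).
  { apply Rle_trans with (2 * PI / (Cmod u / 2)).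
    - apply Rmult_le_compat_l; [lra|]. apply Rinv_le_contravar; [nra|lra].
    - rewrite Hu. right. field. split; lra. }
  apply Rle_trans with ((Cmod l0 + 1) * h * (2 / h)).
  - apply Rmult_le_compat; auto; [apply Cmod_ge_0|]. apply Rdiv_le_0_compat; [lra|nra].
  - right. field. lra.
Qed.

(** * Exponential decay of periodic holomorphic functions vanishing at infinity *)

Section PeriodicDecay.

Variables (f : C -> C) (y1 y0 : R).
Hypotheses (Hy1 : 0 < y1) (Hy0 : y1 + 1 <= y0)
  (Hder : forall z, 0 < snd z -> Cderivable f z)
  (Hper : forall x y, 0 < y -> f (x + 1, y) = f (x, y))
  (Hbd : forall z, y1 <= snd z -> Cmod (f z) <= 1)
  (Hvan : forall eps, 0 < eps -> exists Y, forall z, Y < snd z -> Cmod (f z) < eps).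

Let z0 : C := (0, y0).
Let G (z : C) : C := ((f z - f z0) * per_kernel z0 z)%C.

Let e2pi_neq_1_strip (x y : R) : Rabs x <= /2 -> (x, y) <> z0 -> e2pi ((x, y) - z0) <> 1%C.
Proof.
  intros Hx Hne. apply e2pi_neq_1.
  - unfold z0, Cminus, Cplus, Copp; simpl. rewrite Ropp_0, Rplus_0_r. exact Hx.
  - intro E. apply Hne. unfold z0, Cminus, Cplus, Copp in *. simpl in E.
    injection E as Ex Ey. f_equal; lra.
Qed.

Let G_Cderivable (x y : R) : Rabs x <= /2 -> 0 < y -> (x, y) <> z0 -> Cderivable G (x, y).
Proof.
  intros Hx Hy Hne. apply Cderivable_mult.
  - apply Cderivable_minus; [apply Hder; exact Hy|apply Cderivable_const].
  - apply per_kernel_Cderivable, e2pi_neq_1_strip; auto.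
Qed.

Let G_hseg_cont (y : R) : y1 <= y -> y <> y0 -> hseg_cont G (- / 2) (/ 2) y.
Proof.
  intros Hy Hne x Hx. apply Cderivable_cont, G_Cderivable; [apply Rabs_le; lra|lra|].
  intro E. injection E. lra.
Qed.

(* Periodicity makes the vertical sides cancel, so the integrals of [G] over two horizontal periods agree. *)
Let G_period_int (Y : R) : y0 + 1 < Y ->
  CInt (fun x => G (x, y1)) (- / 2) (/ 2) = CInt (fun x => G (x, Y)) (- / 2) (/ 2).
Proof.
  intros HY. destruct (per_kernel_removable f z0 (Hder z0 ltac:(simpl; lra))) as [M [d0 [Hd0 HM]]].
  assert (HRI : rect_int G (- / 2) (/ 2) y1 Y = 0%C).
  { apply (goursat_punctured G 0 y0 _ _ _ _ M d0); try lra.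
    - intros [x y] [Hx Hy] Hne. apply G_Cderivable; [apply Rabs_le|simpl in *|]; auto; lra.
    - intros z _ Hne Hz. apply (HM z Hne Hz). }
  unfold rect_int in HRI.
  rewrite (CInt_ext (fun y => G (/ 2, y)) (fun y => G (- / 2, y))) in HRI.
  - set (Bot := CInt (fun x => G (x, y1)) (- / 2) (/ 2)) in *.
    set (Top := CInt (fun x => G (x, Y)) (- / 2) (/ 2)) in *.
    set (Side := CInt (fun y => G (- / 2, y)) y1 Y) in *.
    replace Bot with (Bot - Top + Ci * (Side - Side) + Top)%C by ring. rewrite HRI. ring.
  - intros y Hy. rewrite Rmin_left, Rmax_right in Hy by lra. unfold G.
    replace (/ 2) with (- / 2 + 1) at 1 2 by field. rewrite per_kernel_shift, Hper by lra. reflexivity.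
Qed.

Let q : R := exp (- (2 * PI) * (y0 - y1)).

Let G_bottom_bound : Cmod (CInt (fun x => G (x, y1)) (- / 2) (/ 2)) <= 6 * PI * q.
Proof.
  assert (Hq : 0 < q) by apply exp_pos. pose proof PI2_3_2.
  replace (6 * PI * q) with ((/ 2 - - / 2) * (6 * PI * q)) by field.
  apply CInt_bound; [lra|apply ex_CInt_hseg; [lra|apply G_hseg_cont; lra]|].
  intros x Hx. unfold G.
  assert (Hne : e2pi ((x, y1) - z0) <> 1%C)
    by (apply e2pi_neq_1_strip; [apply Rabs_le; lra|intro E; injection E; lra]).
  rewrite Cmod_mult, Cmod_per_kernel by exact Hne.
  assert (HQ : Cmod (e2pi ((x, y1) - z0)) = / q).
  { rewrite Cmod_e2pi. unfold q. rewrite <- exp_Ropp. f_equal. simpl. ring. }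
  (* [e^(2 pi (y0 - y1)) >= 1 + 2 pi >= 3] *)
  assert (HQ3 : 3 <= / q).
  { rewrite <- HQ, Cmod_e2pi. simpl. eapply Rle_trans; [|apply exp_ineq1_le]. nra. }
  assert (HE1 : / q - 1 <= Cmod (e2pi ((x, y1) - z0) - 1)).
  { rewrite <- HQ. pose proof (Cmod_sub_ge (e2pi ((x, y1) - z0)) 1). rewrite Cmod_1 in H0. lra. }
  assert (Hfx : Cmod (f (x, y1) - f z0) <= 2).
  { unfold Cminus. eapply Rle_trans; [apply Cmod_triangle|]. rewrite Cmod_opp.
    pose proof (Hbd (x, y1) ltac:(simpl; lra)). pose proof (Hbd z0 ltac:(simpl; lra)). lra. }
  assert (HL : 2 * PI / Cmod (e2pi ((x, y1) - z0) - 1) <= 3 * PI * q).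
  { apply Rle_trans with (2 * PI / (/ q - 1)).
    - apply Rmult_le_compat_l; [lra|]. apply Rinv_le_contravar; lra.
    - assert (q <= / 3) by (rewrite <- (Rinv_inv q); apply Rinv_le_contravar; lra).
      apply Rmult_le_reg_r with (/ q - 1); [lra|].
      replace (2 * PI / (/ q - 1) * (/ q - 1)) with (2 * PI) by (field; split; lra).
      replace (3 * PI * q * (/ q - 1)) with (3 * PI - 3 * PI * q) by (field; lra). nra. }
  apply Rle_trans with (2 * (3 * PI * q)); [|lra].
  apply Rmult_le_compat; auto; [apply Cmod_ge_0|]. apply Rdiv_le_0_compat; lra.
Qed.

(* High up, [f] is small and the kernel is close to [- 2 pi i]. *)
Let G_high_le (Y eta x : R) : y0 < Y -> 0 < eta ->
  exp (- (2 * PI) * (Y - y0)) <= eta -> exp (- (2 * PI) * (Y - y0)) <= / 2 ->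
  Cmod (f (x, Y)) <= eta -> Rabs x <= / 2 ->
  Cmod (G (x, Y) - f z0 * two_pi_i) <= 8 * PI * eta.
Proof.
  intros HY Heta Hpe Hp2 Hfy Hx. pose proof PI2_3_2.
  set (p := exp (- (2 * PI) * (Y - y0))) in *. assert (Hp0 : 0 < p) by apply exp_pos.
  assert (Hne : e2pi ((x, Y) - z0) <> 1%C) by (apply e2pi_neq_1_strip; [lra|intro E; injection E; lra]).
  assert (HP : Cmod (e2pi ((x, Y) - z0)) = p) by (rewrite Cmod_e2pi; unfold p; f_equal).
  assert (HE1 : 1 - p <= Cmod (e2pi ((x, Y) - z0) - 1)).
  { rewrite <- HP, Cmod_sub_sym. pose proof (Cmod_sub_ge 1 (e2pi ((x, Y) - z0))). rewrite Cmod_1 in H0. lra. }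
  unfold G.
  replace ((f (x, Y) - f z0) * per_kernel z0 (x, Y) - f z0 * two_pi_i)%C with
    (f (x, Y) * per_kernel z0 (x, Y) - f z0 * (per_kernel z0 (x, Y) + two_pi_i))%C by ring.
  unfold Cminus. eapply Rle_trans; [apply Cmod_triangle|].
  rewrite Cmod_opp, !Cmod_mult, Cmod_per_kernel, Cmod_per_kernel_add, HP by exact Hne.
  assert (Hf0 : Cmod (f z0) <= 1) by (apply Hbd; simpl; lra).
  assert (A1 : 2 * PI / Cmod (e2pi ((x, Y) - z0) - 1) <= 4 * PI).
  { apply Rle_trans with (2 * PI / (1 - p)); [apply Rmult_le_compat_l; [lra|apply Rinv_le_contravar; lra]|].
    apply Rmult_le_reg_r with (1 - p); [lra|].
    replace (2 * PI / (1 - p) * (1 - p)) with (2 * PI) by (field; lra). nra. }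
  assert (A2 : 2 * PI * p / Cmod (e2pi ((x, Y) - z0) - 1) <= 4 * PI * eta).
  { apply Rle_trans with (2 * PI * p / (1 - p)); [apply Rmult_le_compat_l; [nra|apply Rinv_le_contravar; lra]|].
    apply Rmult_le_reg_r with (1 - p); [lra|].
    replace (2 * PI * p / (1 - p) * (1 - p)) with (2 * PI * p) by (field; lra).
    assert (0 <= PI * eta * (1 - 2 * p)) by (apply Rmult_le_pos; nra). nra. }
  pose proof (Cmod_ge_0 (f (x, Y))). pose proof (Cmod_ge_0 (f z0)).
  assert (0 <= 2 * PI / Cmod (e2pi ((x, Y) - z0) - 1)) by (apply Rdiv_le_0_compat; lra).
  assert (0 <= 2 * PI * p / Cmod (e2pi ((x, Y) - z0) - 1)) by (apply Rdiv_le_0_compat; nra).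
  nra.
Qed.

Let G_top_bound (eta : R) : 0 < eta -> exists Y, y0 + 1 < Y /\
  Cmod (CInt (fun x => G (x, Y)) (- / 2) (/ 2) - f z0 * two_pi_i) <= 8 * PI * eta.
Proof.
  intros Heta. pose proof PI2_3_2. destruct (Hvan eta Heta) as [Ye HYe].
  set (Y := Rmax (y0 + 2) (Rmax (Ye + 1) (y0 + / (2 * PI * eta)))).
  assert (HY1 : y0 + 2 <= Y) by apply Rmax_l.
  assert (HY2 : Ye + 1 <= Y) by (eapply Rle_trans; [apply Rmax_l|apply Rmax_r]).
  assert (HY3 : y0 + / (2 * PI * eta) <= Y) by (eapply Rle_trans; [apply Rmax_r|apply Rmax_r]).
  exists Y. split; [lra|].
  assert (Ht : 1 + 2 * PI * (Y - y0) <= / exp (- (2 * PI) * (Y - y0))).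
  { rewrite <- exp_Ropp. replace (- (- (2 * PI) * (Y - y0))) with (2 * PI * (Y - y0)) by ring.
    apply exp_ineq1_le. }
  assert (/ eta <= 2 * PI * (Y - y0)).
  { apply Rmult_le_reg_l with (/ (2 * PI)); [apply Rinv_0_lt_compat; lra|].
    replace (/ (2 * PI) * (2 * PI * (Y - y0))) with (Y - y0) by (field; lra).
    replace (/ (2 * PI) * / eta) with (/ (2 * PI * eta)) by (field; lra). lra. }
  pose proof (exp_pos (- (2 * PI) * (Y - y0))).
  assert (Hpe : exp (- (2 * PI) * (Y - y0)) <= eta).
  { rewrite <- (Rinv_inv eta), <- (Rinv_inv (exp _)). apply Rinv_le_contravar; [apply Rinv_0_lt_compat|]; lra. }
  assert (Hp2 : exp (- (2 * PI) * (Y - y0)) <= / 2)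
    by (rewrite <- (Rinv_inv (exp _)); apply Rinv_le_contravar; nra).
  replace (f z0 * two_pi_i)%C with (CInt (fun _ => f z0 * two_pi_i) (- / 2) (/ 2))%C
    by (rewrite CInt_const; replace (/ 2 - - / 2) with 1 by field; ring).
  assert (Hex : ex_CInt (fun x => G (x, Y)) (- / 2) (/ 2))
    by (apply ex_CInt_hseg; [lra|apply G_hseg_cont; lra]).
  rewrite <- CInt_minus by (auto; apply (@ex_RInt_const C_R_NormedModule)).
  replace (8 * PI * eta) with ((/ 2 - - / 2) * (8 * PI * eta)) by field.
  apply CInt_bound; [lra|apply (@ex_RInt_minus C_R_NormedModule); auto; apply (@ex_RInt_const C_R_NormedModule)|].
  intros x Hx. apply G_high_le; try lra; [left; apply HYe; simpl; lra|apply Rabs_le; lra].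
Qed.

Theorem periodic_decay : Cmod (f (0, y0)) <= 3 * exp (- (2 * PI) * (y0 - y1)).
Proof.
  fold q. change (0, y0) with z0. pose proof PI2_3_2.
  apply le_epsilon. intros e He.
  destruct (G_top_bound (e / 8) ltac:(lra)) as [Y [HY Htop]].
  rewrite <- (G_period_int Y HY) in Htop. pose proof G_bottom_bound.
  pose proof (Cmod_sub_ge (f z0 * two_pi_i) (CInt (fun x => G (x, y1)) (- / 2) (/ 2))).
  rewrite Cmod_sub_sym, Cmod_mult, Cmod_two_pi_i in H1.
  assert (2 * PI * Cmod (f z0) <= 2 * PI * (3 * q + e)) by nra.
  apply Rmult_le_reg_l with (2 * PI); lra.
Qed.

End PeriodicDecay.

(** * Improper integrals over (0, +oo) *)

Lemma Cauchy_lim_at_right_0 (I : R -> C) :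
  (forall eps, 0 < eps -> exists del, 0 < del /\
     forall a a', 0 < a < del -> 0 < a' < del -> Cmod (I a - I a') < eps) ->
  exists l, forall eps, 0 < eps -> exists del, 0 < del /\ forall a, 0 < a < del -> Cmod (I a - l) < eps.
Proof.
  intros HC. set (F := filtermap I (at_right 0)).
  set (CS := CompleteNormedModule.CompleteSpace R_AbsRing C_R_CompleteNormedModule).
  assert (PF : ProperFilter F) by (apply filtermap_proper_filter, at_right_proper_filter).
  assert (Hright : forall d a, 0 < d -> 0 < a < d -> @ball R_UniformSpace 0 d a).
  { intros d a Hd Ha. change (Rabs (a + - 0) < d). rewrite Ropp_0, Rplus_0_r, Rabs_right; lra. }
  assert (CF : @cauchy CS F).
  { intros eps. destruct (HC eps (cond_pos eps)) as [d [Hd Hdd]].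
    exists (I (d / 2)). exists (mkposreal d Hd). intros a Ha Ha0.
    apply ball_C_R_of_Cmod. change (Rabs (a + - 0) < d) in Ha.
    rewrite Ropp_0, Rplus_0_r, Rabs_right in Ha by lra.
    rewrite Cmod_sub_sym. apply Hdd; lra. }
  exists (@lim CS F). intros eps Heps.
  destruct (@complete_cauchy CS F PF CF (mkposreal (eps / 2) ltac:(lra))) as [d Hd].
  exists d. split; [apply cond_pos|]. intros a Ha.
  specialize (Hd a (Hright d a (cond_pos d) Ha) ltac:(lra)).
  apply Cmod_of_ball_C_R in Hd. simpl in Hd. lra.
Qed.

Section ImproperIntegral.

Variables (g : R -> C) (A : R).
Hypotheses (HA : 0 <= A) (Hcont : forall t, 0 < t -> Ccont_real g t)
  (Hnear0 : forall t, 0 < t <= 1 -> Cmod (g t) <= A)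
  (Htail : forall t, 1 <= t -> Cmod (g t) <= A * exp (- t)).

Let ex_g (a b : R) : 0 < a -> 0 < b -> ex_CInt g a b.
Proof.
  intros Ha Hb. apply ex_CInt_cont. intros t Ht. apply Hcont.
  apply Rlt_le_trans with (Rmin a b); [apply Rmin_pos|]; lra.
Qed.

Let int_near_0_bound (a a' : R) : 0 < a <= 1 -> 0 < a' <= 1 -> Cmod (CInt g a a') <= Rabs (a' - a) * A.
Proof.
  intros Ha Ha'. destruct (Rle_dec a a').
  - rewrite Rabs_right by lra. apply CInt_bound; auto; [apply ex_g; lra|intros; apply Hnear0; lra].
  - rewrite CInt_swap, Cmod_opp by (apply ex_g; lra). rewrite Rabs_left1 by lra.
    replace (- (a' - a)) with (a - a') by ring.
    apply CInt_bound; [lra|apply ex_g; lra|intros; apply Hnear0; lra].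
Qed.

Let int_tail_bound (b b' : R) : 1 <= b <= b' -> Cmod (CInt g b b') <= A * exp (- b).
Proof.
  intros Hb. rewrite <- norm_C_R.
  apply Rle_trans with (A * exp (- b) - A * exp (- b')); [|pose proof (exp_pos (- b')); nra].
  apply (@norm_RInt_le C_R_NormedModule g (fun t => A * exp (- t)) b b'); [lra| |
    apply (@RInt_correct C_R_CompleteNormedModule), ex_g; lra|].
  - intros x Hx. rewrite norm_C_R. apply Htail; lra.
  - replace (A * exp (- b) - A * exp (- b')) with (minus (- A * exp (- b')) (- A * exp (- b)))
      by (unfold minus, plus, opp; simpl; ring).
    apply (@is_RInt_derive R_CompleteNormedModule (fun t => - A * exp (- t))).
    + intros x _. auto_derive; auto. ring.
    + intros x _. apply (@ex_derive_continuous R_AbsRing R_NormedModule). auto_derive; auto.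
Qed.

Let int_tail_bound_min (b b' : R) : 1 <= b -> 1 <= b' -> Cmod (CInt g b b') <= A * exp (- Rmin b b').
Proof.
  intros Hb Hb'. destruct (Rle_dec b b').
  - rewrite Rmin_left by lra. apply int_tail_bound; lra.
  - rewrite Rmin_right by lra. rewrite CInt_swap, Cmod_opp by (apply ex_g; lra). apply int_tail_bound; lra.
Qed.

Let near_0_lim (l1 : C) : Prop := forall eps, 0 < eps -> exists del, 0 < del /\
  forall a, 0 < a < del -> Cmod (CInt g a 1 - l1) < eps.

(* The tail is parametrised by [a = 1 / b -> 0+]. *)
Let tail_lim (l2 : C) : Prop := forall eps, 0 < eps -> exists del, 0 < del /\
  forall a, 0 < a < del -> Cmod (CInt g 1 (/ a) - l2) < eps.

Let lim_near_0 : exists l1, near_0_lim l1.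
Proof.
  apply Cauchy_lim_at_right_0. intros eps Heps.
  set (r := eps / (A + 1)). assert (Hr : 0 < r) by (apply Rdiv_lt_0_compat; lra).
  exists (Rmin 1 r). split; [apply Rmin_pos; lra|].
  intros a a' Ha Ha'. pose proof (Rmin_l 1 r). pose proof (Rmin_r 1 r).
  replace (CInt g a 1 - CInt g a' 1)%C with (CInt g a a')
    by (rewrite <- (CInt_Chasles g a a' 1) by (apply ex_g; lra); ring).
  eapply Rle_lt_trans; [apply int_near_0_bound; lra|].
  assert (Rabs (a' - a) < r) by (apply Rabs_def1; lra).
  apply Rle_lt_trans with (r * A); [apply Rmult_le_compat_r; lra|].
  apply Rlt_le_trans with (r * (A + 1)); [apply Rmult_lt_compat_l; lra|].
  right; unfold r; field; lra.
Qed.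

Let lim_at_oo : exists l2, tail_lim l2.
Proof.
  apply Cauchy_lim_at_right_0. intros eps Heps.
  set (r := eps / (A + 1)). assert (Hr : 0 < r) by (apply Rdiv_lt_0_compat; lra).
  exists (Rmin 1 r). split; [apply Rmin_pos; lra|].
  intros a a' Ha Ha'. pose proof (Rmin_l 1 r). pose proof (Rmin_r 1 r).
  assert (Hi : 1 <= / a) by (rewrite <- Rinv_1; apply Rinv_le_contravar; lra).
  assert (Hi' : 1 <= / a') by (rewrite <- Rinv_1; apply Rinv_le_contravar; lra).
  replace (CInt g 1 (/ a) - CInt g 1 (/ a'))%C with (CInt g (/ a') (/ a))
    by (rewrite <- (CInt_Chasles g 1 (/ a') (/ a)) by (apply ex_g; lra); ring).
  eapply Rle_lt_trans; [apply int_tail_bound_min; lra|].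
  assert (Hexp : exp (- Rmin (/ a') (/ a)) <= Rmax a a').
  { assert (Hm : 0 < Rmin (/ a') (/ a)) by (apply Rmin_pos; lra).
    rewrite exp_Ropp. apply Rle_trans with (/ Rmin (/ a') (/ a)).
    - apply Rinv_le_contravar; [lra|]. pose proof (exp_ineq1_le (Rmin (/ a') (/ a))). lra.
    - destruct (Rle_dec (/ a') (/ a)).
      + rewrite Rmin_left, Rinv_inv by lra. apply Rmax_r.
      + rewrite Rmin_right, Rinv_inv by lra. apply Rmax_l. }
  assert (Rmax a a' < r) by (apply Rmax_lub_lt; lra).
  apply Rle_lt_trans with (A * r); [apply Rle_trans with (A * Rmax a a'); apply Rmult_le_compat_l; lra|].
  apply Rlt_le_trans with ((A + 1) * r); [apply Rmult_lt_compat_r; lra|].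
  right; unfold r; field; lra.
Qed.

Let improper_is_RInt_gen (l1 l2 : C) : near_0_lim l1 -> tail_lim l2 ->
  @is_RInt_gen C_R_NormedModule g (at_right 0) (Rbar_locally p_infty) (l1 + l2)%C.
Proof.
  intros Hl1 Hl2 P [eps HP].
  destruct (Hl1 (eps / 2) ltac:(destruct eps; simpl; lra)) as [d1 [Hd1 H1]].
  destruct (Hl2 (eps / 2) ltac:(destruct eps; simpl; lra)) as [d2 [Hd2 H2]].
  apply (Filter_prod _ _ _ (fun a => 0 < a < Rmin d1 1) (fun b => Rmax (/ d2) 1 < b)).
  - exists (mkposreal (Rmin d1 1) ltac:(apply Rmin_pos; lra)). intros a Ha Ha0. simpl in *.
    change (Rabs (a + - 0) < Rmin d1 1) in Ha. rewrite Ropp_0, Rplus_0_r, Rabs_right in Ha; lra.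
  - exists (Rmax (/ d2) 1). auto.
  - intros a b Ha Hb. simpl. pose proof (Rmax_l (/ d2) 1). pose proof (Rmax_r (/ d2) 1).
    pose proof (Rmin_l d1 1).
    exists (CInt g a b). split; [apply (@RInt_correct C_R_CompleteNormedModule), ex_g; lra|].
    apply HP, ball_C_R_of_Cmod.
    rewrite <- (CInt_Chasles g a 1 b) by (apply ex_g; lra).
    specialize (H1 a ltac:(lra)).
    assert (Hb' : 0 < / b < d2).
    { split; [apply Rinv_0_lt_compat; lra|]. rewrite <- (Rinv_inv d2).
      apply Rinv_lt_contravar; [apply Rmult_lt_0_compat; [apply Rinv_0_lt_compat|]|]; lra. }
    specialize (H2 (/ b) Hb'). rewrite Rinv_inv in H2.
    replace (CInt g a 1 + CInt g 1 b - (l1 + l2))%C with (CInt g a 1 - l1 + (CInt g 1 b - l2))%C by ring.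
    eapply Rle_lt_trans; [apply Cmod_triangle|]. lra.
Qed.

Let improper_lim_le (l1 l2 : C) : near_0_lim l1 -> tail_lim l2 -> Cmod (l1 + l2) <= 2 * A.
Proof.
  intros Hl1 Hl2. apply le_epsilon. intros eps Heps.
  destruct (Hl1 (eps / 2) ltac:(lra)) as [d1 [Hd1 H1]], (Hl2 (eps / 2) ltac:(lra)) as [d2 [Hd2 H2]].
  set (a := Rmin d1 1 / 2). set (a' := Rmin d2 1 / 2).
  assert (Ha : 0 < a < d1 /\ a <= 1).
  { pose proof (Rmin_l d1 1). pose proof (Rmin_r d1 1). pose proof (Rmin_glb_lt d1 1 0). unfold a. lra. }
  assert (Ha' : 0 < a' < d2 /\ a' <= 1).
  { pose proof (Rmin_l d2 1). pose proof (Rmin_r d2 1). pose proof (Rmin_glb_lt d2 1 0). unfold a'. lra. }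
  specialize (H1 a ltac:(lra)). specialize (H2 a' ltac:(lra)).
  assert (Hi : 1 <= / a') by (rewrite <- Rinv_1; apply Rinv_le_contravar; lra).
  pose proof (int_near_0_bound a 1 ltac:(lra) ltac:(lra)) as B1. rewrite Rabs_right in B1 by lra.
  pose proof (int_tail_bound 1 (/ a') ltac:(lra)) as B2.
  assert (exp (- (1)) <= 1) by (pose proof (exp_increasing (- (1)) 0 ltac:(lra)) as He; rewrite exp_0 in He; lra).
  replace (l1 + l2)%C with (CInt g a 1 + CInt g 1 (/ a') - (CInt g a 1 - l1 + (CInt g 1 (/ a') - l2)))%C
    by ring.
  unfold Cminus at 1. eapply Rle_trans; [apply Cmod_triangle|]. rewrite Cmod_opp.
  pose proof (Cmod_triangle (CInt g a 1) (CInt g 1 (/ a'))).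
  pose proof (Cmod_triangle (CInt g a 1 - l1) (CInt g 1 (/ a') - l2)).
  assert ((1 - a) * A <= A) by nra. assert (A * exp (- (1)) <= A) by nra. lra.
Qed.

Theorem improper_integral_bound :
  exists l, @is_RInt_gen C_R_NormedModule g (at_right 0) (Rbar_locally p_infty) l /\ Cmod l <= 2 * A.
Proof.
  destruct lim_near_0 as [l1 Hl1], lim_at_oo as [l2 Hl2].
  exists (l1 + l2)%C. split; [apply improper_is_RInt_gen|apply improper_lim_le]; assumption.
Qed.

End ImproperIntegral.

(** * Principal complex powers *)

Lemma Rpower_base_1 (a : R) : Rpower 1 a = 1.
Proof. unfold Rpower. rewrite ln_1, Rmult_0_r. apply exp_0. Qed.

Lemma Rpower_gt_0 (x a : R) : 0 < Rpower x a.
Proof. apply exp_pos. Qed.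

Lemma cpow_pos_real (r a : R) : 0 < r -> cpow (r, 0) a = RtoC (Rpower r a).
Proof.
  intros Hr. assert (Hm : Cmod (r, 0) = r).
  { unfold Cmod; simpl. replace (r * (r * 1) + 0 * (0 * 1)) with (r ^ 2) by ring. apply sqrt_pow2; lra. }
  assert (Harg : Carg (r, 0) = 0).
  { unfold Carg; simpl. destruct (Rlt_dec 0 r); [|lra]. rewrite Rdiv_0_l. apply atan_0. }
  unfold cpow. rewrite Harg, Hm. destruct (Req_EM_T r 0); [lra|]. cbn [ssrbool.is_left].
  rewrite Rmult_0_r, cos_0, sin_0. unfold Cmult, RtoC; simpl. f_equal; ring.
Qed.

Lemma cpow_1_l (a : R) : cpow 1 a = 1%C.
Proof. unfold RtoC. rewrite cpow_pos_real, Rpower_base_1 by lra. reflexivity. Qed.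

Lemma Cmod_cpow (z : C) (a : R) : z <> 0%C -> Cmod (cpow z a) = Rpower (Cmod z) a.
Proof.
  intros Hz. unfold cpow. destruct (Req_EM_T (Cmod z) 0) as [E|E]; [exfalso; apply Hz, Cmod_eq_0, E|].
  cbn [ssrbool.is_left].
  rewrite Cmod_mult, Cmod_R, Rabs_right by (left; apply exp_pos).
  unfold Cmod at 2; simpl.
  replace (cos (a * Carg z) * (cos (a * Carg z) * 1) + sin (a * Carg z) * (sin (a * Carg z) * 1)) with 1
    by (pose proof (sin2_cos2 (a * Carg z)); unfold Rsqr in *; nra).
  rewrite sqrt_1. ring.
Qed.

Lemma Cmod_cpow_le (z : C) (a : R) : Cmod (cpow z a) <= Rpower (Cmod z) a.
Proof.
  destruct (Req_dec (Cmod z) 0) as [E|E].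
  - unfold cpow. destruct (Req_EM_T (Cmod z) 0); [|contradiction]. cbn [ssrbool.is_left]. rewrite Cmod_0. left; apply exp_pos.
  - rewrite Cmod_cpow; [lra|]. intro Hz. rewrite Hz, Cmod_0 in E. lra.
Qed.

Lemma Cmod_cpow_Ci (a : R) : Cmod (cpow Ci a) = 1.
Proof. rewrite Cmod_cpow, Cmod_Ci, Rpower_base_1; [reflexivity|]. intro E. injection E. lra. Qed.

(* For [y, s > 0] the point [i s - y] lies in the open second quadrant, where [Carg] is smooth. *)
Lemma Ccont_real_cpow_imag_sub (y a t : R) : 0 < y -> 0 < t ->
  Ccont_real (fun s => cpow ((0, s) - y) a) t.
Proof.
  intros Hy Ht.
  set (re s := exp (a * ln (sqrt (y ^ 2 + s ^ 2))) * cos (a * (atan (- (s / y)) + PI))).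
  set (im s := exp (a * ln (sqrt (y ^ 2 + s ^ 2))) * sin (a * (atan (- (s / y)) + PI))).
  apply (Ccont_real_ext _ (fun s => (re s, im s))).
  - exists t. split; [exact Ht|]. intros s Hs. apply Rabs_def2 in Hs.
    assert (Hm : Cmod ((0, s) - y) = sqrt (y ^ 2 + s ^ 2))
      by (unfold Cmod, Cminus, Cplus, Copp, RtoC; simpl; f_equal; ring).
    assert (Ha : Carg ((0, s) - y) = atan (- (s / y)) + PI).
    { unfold Carg, Cminus, Cplus, Copp, RtoC; simpl.
      destruct (Rlt_dec 0 (0 + - y)); [lra|]. destruct (Rlt_dec (0 + - y) 0); [|lra].
      destruct (Rle_dec 0 (s + - 0)); [|lra]. cbn [ssrbool.is_left]. do 2 f_equal. field. lra. }
    unfold cpow. rewrite Hm, Ha. destruct (Req_EM_T (sqrt (y ^ 2 + s ^ 2)) 0) as [E|E].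
    + exfalso. apply sqrt_eq_0 in E; nra.
    + cbn [ssrbool.is_left]. unfold re, im, Rpower, Cmult, RtoC; simpl. f_equal; ring.
  - apply Ccont_real_pair; apply (@ex_derive_continuous R_AbsRing R_NormedModule); unfold re, im;
      auto_derive; repeat split; try lra; try nra; apply sqrt_lt_R0; nra.
Qed.

(** * Cusp forms on the imaginary axis *)

Lemma cusp_form_Cderivable (k : R) (N : nat) (f : C -> C) :
  cusp_form_star k N f -> forall z, 0 < snd z -> Cderivable f z.
Proof. intros [Hhol _] z Hz. apply Cderivable_of_ex_derive_C, Hhol, Hz. Qed.

Lemma cusp_form_periodic (k : R) (N : nat) (f : C -> C) :
  cusp_form_star k N f -> forall x y, 0 < y -> f (x + 1, y) = f (x, y).
Proof.
  intros [_ [Hg _]] x y Hy. specialize (Hg 1%Z 1%Z 0%Z 1%Z ltac:(split; [reflexivity|exists 0%Z; reflexivity]) (x, y) Hy).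
  unfold slash in Hg. replace (kronecker 0 1) with 1%Z in Hg by reflexivity.
  replace (eps 1) with (RtoC 1) in Hg by reflexivity.
  replace (Cplus (Cmult (RtoC (IZR 0)) (x, y)) (RtoC (IZR 1))) with (RtoC 1) in Hg
    by (unfold Cplus, Cmult, RtoC; simpl; f_equal; ring).
  rewrite !cpow_1_l in Hg.
  replace (mob 1 1 0 1 (x, y)) with (x + 1, y) in Hg
    by (unfold mob, Cdiv, Cinv, Cplus, Cmult, RtoC; simpl; f_equal; field).
  rewrite <- Hg. unfold Cmult, RtoC; simpl. destruct (f (x + 1, y)). simpl. f_equal; ring.
Qed.

Lemma cusp_form_vanishes_at_oo (k : R) (N : nat) (f : C -> C) :
  cusp_form_star k N f -> forall e, 0 < e -> exists Y, forall z, Y < snd z -> Cmod (f z) < e.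
Proof.
  intros [_ [_ [_ Hcusp]]] e He. destruct (Hcusp 1%Z 0%Z 0%Z 1%Z eq_refl e He) as [Y HY].
  exists Y. intros z Hz. specialize (HY z Hz).
  replace (Cplus (Cmult (RtoC (IZR 0)) z) (RtoC (IZR 1))) with (RtoC 1) in HY
    by (destruct z; unfold Cplus, Cmult, RtoC; simpl; f_equal; ring).
  replace (mob 1 0 0 1 z) with z in HY
    by (destruct z; unfold mob, Cdiv, Cinv, Cplus, Cmult, RtoC; simpl; f_equal; field).
  rewrite cpow_1_l, Cmod_mult, Cmod_1, Rmult_1_l in HY. exact HY.
Qed.

Lemma cusp_form_fricke_imag (k : R) (N : nat) (f : C -> C) : (0 < N)%nat ->
  cusp_form_star k N f ->
  forall t, 0 < t -> f (0, t) = Cmult (Rpower (sqrt (INR N) * t) (- k)) (f (0, / (INR N * t))).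
Proof.
  intros HN [_ [_ [HW _]]] t Ht. assert (HN' : 0 < INR N) by (apply lt_0_INR; auto).
  assert (Hs : 0 < sqrt (INR N)) by (apply sqrt_lt_R0; auto).
  rewrite <- (HW (0, t) Ht). unfold slashW.
  replace (Cmult (Cmult (Copp Ci) (RtoC (sqrt (INR N)))) (0, t)) with (sqrt (INR N) * t, 0)
    by (unfold Cmult, Copp, Ci, RtoC; simpl; f_equal; ring).
  rewrite cpow_pos_real by (apply Rmult_lt_0_compat; auto).
  do 2 f_equal. unfold Copp, Cinv, Cmult, RtoC; simpl. f_equal; field; lra.
Qed.

Lemma Ccont_real_imag_axis (f : C -> C) (t : R) : Ccont f (0, t) -> Ccont_real (fun s => f (0, s)) t.
Proof.
  apply (Ccont_real_comp f (fun s => (0, s))). intros s.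
  eapply Rle_trans; [apply Cmod_le_Rabs_sum|]. simpl. rewrite Rplus_opp_r, Rabs_R0. unfold Rminus. lra.
Qed.

Lemma continuity_pt_Cmod (g : R -> C) (t : R) : Ccont_real g t -> continuity_pt (fun s => Cmod (g s)) t.
Proof.
  intros Hc eps Heps. destruct (Hc eps Heps) as [d [Hd Hdd]].
  exists d. split; [exact Hd|]. intros s [_ Hs]. simpl in *. unfold R_dist in *.
  specialize (Hdd s Hs). pose proof (Cmod_sub_ge (g s) (g t)). pose proof (Cmod_sub_ge (g t) (g s)).
  rewrite Cmod_sub_sym in H0. apply Rabs_def1; lra.
Qed.

(* From [ln u <= u - 1] with [u = c v / s]. *)
Lemma Rpower_le_exp_scaled (v s c : R) : 0 < v -> 0 < s -> 0 < c ->
  Rpower v s <= Rpower (s / c) s * exp (c * v).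
Proof.
  intros Hv Hs Hc. unfold Rpower. rewrite <- exp_plus.
  destruct (Req_dec (s * ln v) (s * ln (s / c) + c * v)) as [E|E]; [rewrite E; lra|left; apply exp_increasing].
  assert (ln v = ln (s / c) + ln (c * v / s)).
  { rewrite <- ln_mult by (apply Rdiv_lt_0_compat; nra). f_equal. field. lra. }
  pose proof (exp_ineq1_le (ln (c * v / s))). rewrite exp_ln in H0 by (apply Rdiv_lt_0_compat; nra).
  replace (c * v) with (s * (c * v / s)) in E |- * by (field; lra). nra.
Qed.

Section ImaginaryAxis.

Variables (f : C -> C) (k : R) (N : nat).
Hypotheses (Hk : 0 < k) (HN : (0 < N)%nat)
  (Hder : forall z, 0 < snd z -> Cderivable f z)
  (Hper : forall x y, 0 < y -> f (x + 1, y) = f (x, y))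
  (Hvan : forall e, 0 < e -> exists Y, forall z, Y < snd z -> Cmod (f z) < e)
  (Hfricke : forall t, 0 < t -> f (0, t) = Cmult (Rpower (sqrt (INR N) * t) (- k)) (f (0, / (INR N * t)))).

Lemma imag_axis_decay : exists D T, 0 <= D /\ 1 <= T /\
  (forall t, T <= t -> Cmod (f (0, t)) <= 1) /\
  (forall t, T <= t -> Cmod (f (0, t)) <= D * exp (- (2 * PI) * t)).
Proof.
  destruct (Hvan 1 Rlt_0_1) as [Y0 HY0].
  set (y1 := Rmax Y0 0 + 1).
  assert (Hy1 : 0 < y1 /\ Y0 < y1) by (pose proof (Rmax_l Y0 0); pose proof (Rmax_r Y0 0); unfold y1; lra).
  assert (Hbd : forall z, y1 <= snd z -> Cmod (f z) <= 1) by (intros z Hz; left; apply HY0; lra).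
  exists (3 * exp (2 * PI * y1)), (y1 + 1). split; [pose proof (exp_pos (2 * PI * y1)); lra|].
  split; [lra|]. split; [intros t Ht; apply Hbd; simpl; lra|].
  intros t Ht. eapply Rle_trans; [apply (periodic_decay f y1 t); auto; lra|].
  rewrite Rmult_assoc, <- exp_plus. right. do 2 f_equal. ring.
Qed.

(* Near 0, the Fricke involution moves the point high up the axis. *)
Lemma imag_axis_near_0_le (D T t : R) : 1 <= T ->
  (forall t, T <= t -> Cmod (f (0, t)) <= D * exp (- (2 * PI) * t)) ->
  0 < t <= / (INR N * T) -> Cmod (f (0, t)) <= Rpower (k / (2 * PI / sqrt (INR N))) k * D.
Proof.
  intros HT Hdec Ht. pose proof PI2_3_2.
  assert (HN' : 0 < INR N) by (apply lt_0_INR; auto).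
  assert (Hs : 0 < sqrt (INR N)) by (apply sqrt_lt_R0; auto).
  set (u := / (INR N * t)).
  assert (Hu : T <= u).
  { unfold u. replace T with (/ (INR N * / (INR N * T))) by (field; lra).
    apply Rinv_le_contravar; [nra|]. apply Rmult_le_compat_l; lra. }
  assert (Hp : Rpower (sqrt (INR N) * t) (- k) = Rpower (sqrt (INR N) * u) k).
  { assert (E : sqrt (INR N) * t = / (sqrt (INR N) * u)).
    { pose proof (sqrt_sqrt (INR N) ltac:(lra)) as E2. unfold u.
      set (sN := sqrt (INR N)) in *. rewrite <- E2. field. split; lra. }
    unfold Rpower. rewrite E, ln_Rinv by nra. f_equal. ring. }
  rewrite Hfricke, Cmod_mult, Cmod_R, Rabs_right, Hp by (lra || (left; apply exp_pos)). fold u.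
  pose proof (Rpower_le_exp_scaled (sqrt (INR N) * u) k (2 * PI / sqrt (INR N)) ltac:(nra) Hk
    ltac:(apply Rdiv_lt_0_compat; lra)) as Hpow.
  replace (2 * PI / sqrt (INR N) * (sqrt (INR N) * u)) with (2 * PI * u) in Hpow by (field; lra).
  pose proof (Hdec u Hu). pose proof (Cmod_ge_0 (f (0, u))).
  apply Rle_trans with (Rpower (k / (2 * PI / sqrt (INR N))) k * exp (2 * PI * u) * (D * exp (- (2 * PI) * u))).
  - apply Rmult_le_compat; auto; left; apply exp_pos.
  - right. replace (- (2 * PI) * u) with (- (2 * PI * u)) by ring. rewrite exp_Ropp.
    field. apply Rgt_not_eq, exp_pos.
Qed.

Lemma imag_axis_bounded : exists B, 0 <= B /\ forall t, 0 < t -> Cmod (f (0, t)) <= B.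
Proof.
  destruct imag_axis_decay as [D [T [HD [HT [Hbig Hdec]]]]].
  assert (HN' : 1 <= INR N) by (apply (le_INR 1); lia).
  set (t0 := / (INR N * T)).
  assert (Ht0 : 0 < t0 <= T).
  { unfold t0. split; [apply Rinv_0_lt_compat; nra|].
    apply Rle_trans with 1; [|lra]. rewrite <- Rinv_1. apply Rinv_le_contravar; nra. }
  set (B0 := Rpower (k / (2 * PI / sqrt (INR N))) k * D).
  assert (Hsmall : forall t, 0 < t <= t0 -> Cmod (f (0, t)) <= B0)
    by (intros t Ht; apply imag_axis_near_0_le with T; auto).
  destruct (continuity_ab_maj (fun s => Cmod (f (0, s))) t0 T ltac:(lra)) as [Mx [HMx _]].
  { intros s Hs. apply continuity_pt_Cmod, Ccont_real_imag_axis, Cderivable_cont, Hder. simpl; lra. }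
  exists (Rmax (Rmax 1 B0) (Cmod (f (0, Mx)))).
  pose proof (Rmax_l (Rmax 1 B0) (Cmod (f (0, Mx)))). pose proof (Rmax_r (Rmax 1 B0) (Cmod (f (0, Mx)))).
  pose proof (Rmax_l 1 B0). pose proof (Rmax_r 1 B0).
  split; [lra|]. intros t Ht.
  destruct (Rle_dec t t0); [pose proof (Hsmall t ltac:(lra)); lra|].
  destruct (Rle_dec t T); [pose proof (HMx t ltac:(lra)); simpl in *; lra|].
  pose proof (Hbig t ltac:(lra)). lra.
Qed.

End ImaginaryAxis.

(** * Growth of the period integral and of the period polynomial *)

Lemma weighted_tail_bound (f : C -> C) (a B D T : R) : 0 < a -> 0 <= B -> 0 <= D -> 1 <= T ->
  (forall t, 0 < t -> Cmod (f (0, t)) <= B) ->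
  (forall t, T <= t -> Cmod (f (0, t)) <= D * exp (- (2 * PI) * t)) ->
  exists K, 0 <= K /\ forall t, 1 <= t -> Cmod (f (0, t)) * Rpower (1 + t) a <= K * exp (- t).
Proof.
  intros Ha HB HD HT Hbd Hdec. pose proof PI2_3_2.
  set (K1 := D * Rpower (a / PI) a). set (K2 := B * Rpower (1 + T) a).
  assert (HK1 : 0 <= K1) by (apply Rmult_le_pos; [lra|left; apply Rpower_gt_0]).
  assert (HK2 : 0 <= K2) by (apply Rmult_le_pos; [lra|left; apply Rpower_gt_0]).
  pose proof (exp_pos PI). pose proof (exp_pos T).
  exists (K1 * exp PI + K2 * exp T). split; [nra|]. intros t Ht.
  pose proof (Cmod_ge_0 (f (0, t))). pose proof (exp_pos (- t)). pose proof (Rpower_gt_0 (1 + t) a).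
  assert (0 <= K1 * exp PI * exp (- t)) by (apply Rmult_le_pos; nra).
  assert (0 <= K2 * exp T * exp (- t)) by (apply Rmult_le_pos; nra).
  destruct (Rle_dec T t) as [HTt|HTt].
  - (* [(1 + t)^a <= (a/pi)^a e^(pi (1 + t))] is beaten by [e^(-2 pi t)] *)
    pose proof (Rpower_le_exp_scaled (1 + t) a PI ltac:(lra) Ha ltac:(lra)) as Hp.
    assert (Hexp : exp (- (2 * PI) * t) * exp (PI * (1 + t)) <= exp PI * exp (- t)).
    { rewrite <- !exp_plus. destruct (Req_dec (- (2 * PI) * t + PI * (1 + t)) (PI + - t)) as [E|E];
        [rewrite E; lra|left; apply exp_increasing; nra]. }
    apply Rle_trans with (D * exp (- (2 * PI) * t) * (Rpower (a / PI) a * exp (PI * (1 + t)))).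
    + apply Rmult_le_compat; [apply Cmod_ge_0|lra|apply Hdec, HTt|exact Hp].
    + apply Rle_trans with (K1 * (exp PI * exp (- t))); [|nra].
      replace (D * exp (- (2 * PI) * t) * (Rpower (a / PI) a * exp (PI * (1 + t))))
        with (K1 * (exp (- (2 * PI) * t) * exp (PI * (1 + t)))) by (unfold K1; ring).
      apply Rmult_le_compat_l; lra.
  - assert (Rpower (1 + t) a <= Rpower (1 + T) a) by (apply Rle_Rpower_l; lra).
    assert (1 <= exp T * exp (- t)).
    { rewrite <- exp_plus, <- exp_0. destruct (Req_dec 0 (T + - t)) as [E|E];
        [rewrite E; lra|left; apply exp_increasing; lra]. }
    pose proof (Hbd t ltac:(lra)).
    apply Rle_trans with K2; [unfold K2; apply Rmult_le_compat; lra|]. nra.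
Qed.

Lemma psi_is_RInt_gen (k : R) (f : C -> C) (y : R) (l : C) :
  @is_RInt_gen C_R_NormedModule (fun t => f (0, t) * cpow ((0, t) - y) (k - 2))%C
    (at_right 0) (Rbar_locally p_infty) l ->
  psi k f y = (Ci * l)%C.
Proof.
  intros H. unfold psi, improper_0_oo. f_equal.
  apply (@is_RInt_gen_unique C_R_CompleteNormedModule);
    [apply Proper_StrongProper, at_right_proper_filter|apply Proper_StrongProper, Rbar_locally_filter|exact H].
Qed.

Lemma psi_growth (k : R) (f : C -> C) (B K : R) : 2 < k -> 0 <= B -> 0 <= K ->
  (forall z, 0 < snd z -> Cderivable f z) ->
  (forall t, 0 < t -> Cmod (f (0, t)) <= B) ->
  (forall t, 1 <= t -> Cmod (f (0, t)) * Rpower (1 + t) (k - 2) <= K * exp (- t)) ->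
  forall y, 0 < y -> Cmod (psi k f y) <= 2 * (B * Rpower 2 (k - 2) + K) * Rpower (1 + y) (k - 2).
Proof.
  intros Hk HB HK Hder Hbd Htail y Hy. set (a := k - 2) in *.
  set (P := Rpower (1 + y) a). assert (HP : 0 < P) by apply exp_pos.
  set (g := fun t => (f (0, t) * cpow ((0, t) - y) a)%C).
  (* [|i t - y| <= t + y <= (1 + t) (1 + y)] *)
  assert (Hg : forall t, 0 < t -> Cmod (g t) <= Cmod (f (0, t)) * Rpower (1 + t) a * P).
  { intros t Ht. unfold g. rewrite Cmod_mult, Rmult_assoc. apply Rmult_le_compat_l; [apply Cmod_ge_0|].
    eapply Rle_trans; [apply Cmod_cpow_le|]. unfold P. rewrite Rpower_mult_distr by lra.
    apply Rle_Rpower_l; [unfold a; lra|]. split.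
    - apply Cmod_gt_0. intro E. injection E. lra.
    - eapply Rle_trans; [apply Cmod_le_Rabs_sum|]. unfold Cminus, Cplus, Copp, RtoC; simpl.
      rewrite Rplus_0_l, Rabs_Ropp, Ropp_0, Rplus_0_r, !Rabs_right by lra. nra. }
  assert (H2a : 0 < Rpower 2 a) by apply exp_pos.
  destruct (improper_integral_bound g ((B * Rpower 2 a + K) * P)) as [l [Hl Hlb]].
  - apply Rmult_le_pos; [apply Rplus_le_le_0_compat; [apply Rmult_le_pos|]|]; lra.
  - intros t Ht. apply Ccont_real_mult.
    + apply Ccont_real_imag_axis, Cderivable_cont, Hder. simpl; lra.
    + apply Ccont_real_cpow_imag_sub; auto.
  - intros t Ht. eapply Rle_trans; [apply Hg; lra|]. apply Rmult_le_compat_r; [lra|].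
    pose proof (Hbd t ltac:(lra)). pose proof (Cmod_ge_0 (f (0, t))).
    assert (Rpower (1 + t) a <= Rpower 2 a) by (apply Rle_Rpower_l; unfold a; lra).
    assert (0 < Rpower (1 + t) a) by apply exp_pos.
    apply Rle_trans with (B * Rpower 2 a); [apply Rmult_le_compat; lra|lra].
  - intros t Ht. eapply Rle_trans; [apply Hg; lra|]. pose proof (Htail t Ht). pose proof (exp_pos (- t)).
    replace ((B * Rpower 2 a + K) * P * exp (- t)) with ((B * Rpower 2 a + K) * exp (- t) * P) by ring.
    apply Rmult_le_compat_r; [lra|].
    assert (0 <= B * Rpower 2 a * exp (- t)) by (apply Rmult_le_pos; [apply Rmult_le_pos|]; lra). nra.
  - rewrite (psi_is_RInt_gen k f y l Hl), Cmod_mult, Cmod_Ci, Rmult_1_l. lra.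
Qed.

Lemma Cmod_poly_le (c : nat -> C) (z : C) (n : nat) : 1 <= Cmod z ->
  Cmod (sum_n (G := C_AbelianMonoid) (fun j => c j * z ^ j)%C n) <= sum_n (fun j => Cmod (c j)) n * Cmod z ^ n.
Proof.
  intros Hz. induction n as [|n IH].
  - rewrite !sum_O. simpl. rewrite Cmod_mult, Cmod_1. lra.
  - rewrite !sum_Sn. change (@plus C_AbelianMonoid ?u ?v) with (u + v)%C.
    change (@plus R_AbelianMonoid ?u ?v) with (u + v).
    eapply Rle_trans; [apply Cmod_triangle|]. rewrite Cmod_mult, Cmod_pow. simpl.
    assert (Hs : 0 <= sum_n (fun j => Cmod (c j)) n).
    { clear IH. induction n as [|n IHn]; [rewrite sum_O; apply Cmod_ge_0|].
      rewrite sum_Sn. pose proof (Cmod_ge_0 (c (S n))). change (@plus R_AbelianMonoid ?u ?v) with (u + v). lra. }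
    pose proof (pow_R1_Rle (Cmod z) n Hz). pose proof (Cmod_ge_0 (c (S n))).
    assert (sum_n (fun j => Cmod (c j)) n * Cmod z ^ n <= sum_n (fun j => Cmod (c j)) n * (Cmod z * Cmod z ^ n))
      by (apply Rmult_le_compat_l; nra).
    lra.
Qed.

Lemma Pk2_growth (k : R) (m N : nat) (f : C -> C) : k = INR m + / 2 -> 5 / 2 < k ->
  exists K, forall x, 1 < x -> Cmod (Pk2 k m N f (0, x)) <= K * Rpower x (k - 5 / 2).
Proof.
  intros Hk Hk52. assert (Hm : (2 <= m)%nat) by (destruct m as [|[|m]]; simpl in Hk; lra || lia).
  eexists. intros x Hx. unfold Pk2. rewrite Cmod_mult, Cmod_cpow_Ci, Rmult_1_l.
  eapply Rle_trans; [apply Cmod_poly_le; rewrite Cmod_imag; lra|]. rewrite Cmod_imag by lra.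
  replace (k - 5 / 2) with (INR (m - 2)) by (rewrite minus_INR by exact Hm; simpl; lra).
  rewrite Rpower_pow by lra. apply Rle_refl.
Qed.

Lemma Rpower_1_add_mul_le (c x a : R) : 0 <= c -> 1 <= x -> 0 <= a ->
  Rpower (1 + c * x) a <= Rpower (1 + c) a * Rpower x a.
Proof.
  intros Hc Hx Ha. rewrite Rpower_mult_distr by lra. apply Rle_Rpower_l; [exact Ha|split; nra].
Qed.

Lemma cusp_form_psi_growth (k : R) (N : nat) (f : C -> C) : 2 < k -> (0 < N)%nat ->
  cusp_form_star k N f ->
  exists A, 0 <= A /\ forall y, 0 < y -> Cmod (psi k f y) <= A * Rpower (1 + y) (k - 2).
Proof.
  intros Hk HN hf.
  pose proof (cusp_form_Cderivable k N f hf) as Hder.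
  pose proof (cusp_form_periodic k N f hf) as Hper.
  pose proof (cusp_form_vanishes_at_oo k N f hf) as Hvan.
  destruct (imag_axis_decay f Hder Hper Hvan) as [D [T [HD [HT [_ Hdec]]]]].
  destruct (imag_axis_bounded f k N ltac:(lra) HN Hder Hper Hvan (cusp_form_fricke_imag k N f HN hf))
    as [B [HB Hbd]].
  destruct (weighted_tail_bound f (k - 2) B D T ltac:(lra) HB HD HT Hbd Hdec) as [K [HK Htail]].
  exists (2 * (B * Rpower 2 (k - 2) + K)). split; [pose proof (Rpower_gt_0 2 (k - 2)); nra|].
  exact (psi_growth k f B K Hk HB HK Hder Hbd Htail).
Qed.

Section PsiEstimates.

Variables (k A : R) (f : C -> C).
Hypotheses (Hk : 2 < k) (HA : 0 <= A)
  (Hpsi : forall y, 0 < y -> Cmod (psi k f y) <= A * Rpower (1 + y) (k - 2)).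

Lemma psi_scaled_le (c x : R) : 0 < c -> 1 <= x ->
  Cmod (psi k f (c * x)) <= A * Rpower (1 + c) (k - 2) * Rpower x (k - 3 / 2).
Proof.
  intros Hc Hx. eapply Rle_trans; [apply Hpsi; nra|]. rewrite Rmult_assoc.
  apply Rmult_le_compat_l; [exact HA|]. eapply Rle_trans; [apply Rpower_1_add_mul_le; lra|].
  apply Rmult_le_compat_l; [left; apply Rpower_gt_0|apply Rle_Rpower; lra].
Qed.

Lemma psi_inv_le (x : R) : 1 <= x -> Cmod (psi k f (/ x)) <= A * Rpower 2 (k - 2).
Proof.
  intros Hx. assert (Hix : 0 < / x <= 1)
    by (split; [apply Rinv_0_lt_compat; lra|rewrite <- Rinv_1; apply Rinv_le_contravar; lra]).
  eapply Rle_trans; [apply Hpsi; lra|]. apply Rmult_le_compat_l; [exact HA|apply Rle_Rpower_l; lra].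
Qed.

End PsiEstimates.

Theorem proposition3p2 (k : R) (m : nat) (N : nat) (f : C -> C)
  (hk : k = INR m + / 2) (hk52 : 5 / 2 < k)
  (hN0 : (0 < N)%nat) (hN4 : Nat.divide 4 N)
  (hf : cusp_form_star k N f) :
  exists Cst : R, forall x : R, 1 < x ->
    Cmod (Cplus (Cminus (Pk2 k m N f (0, x)) (psi k f (INR N * x)))
                (Cmult (Cmult (cpow Ci (1 - 2 * k)) (psi k f (/ x)))
                       (RtoC (Rpower (sqrt (INR N) * x) (k - 5 / 2)))))
    <= Cst * Rpower x (k - 3 / 2).
Proof.
  destruct (cusp_form_psi_growth k N f ltac:(lra) hN0 hf) as [A [HA Hpsi]].
  destruct (Pk2_growth k m N f hk hk52) as [K1 HP].
  assert (Hs : 0 < sqrt (INR N)) by (apply sqrt_lt_R0, lt_0_INR, hN0).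
  set (c3 := A * Rpower 2 (k - 2) * Rpower (sqrt (INR N)) (k - 5 / 2)).
  exists (Rabs K1 + A * Rpower (1 + INR N) (k - 2) + c3). intros x Hx.
  assert (Hx52 : Rpower x (k - 5 / 2) <= Rpower x (k - 3 / 2)) by (apply Rle_Rpower; lra).
  assert (B1 : Cmod (Pk2 k m N f (0, x)) <= Rabs K1 * Rpower x (k - 3 / 2)).
  { pose proof (HP x Hx). pose proof (Rle_abs K1). pose proof (Rabs_pos K1).
    pose proof (Rpower_gt_0 x (k - 5 / 2)). nra. }
  pose proof (psi_scaled_le k A f ltac:(lra) HA Hpsi (INR N) x ltac:(apply lt_0_INR, hN0) ltac:(lra)) as B2.
  assert (B3 : Cmod (Cmult (Cmult (cpow Ci (1 - 2 * k)) (psi k f (/ x)))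
                           (RtoC (Rpower (sqrt (INR N) * x) (k - 5 / 2)))) <= c3 * Rpower x (k - 3 / 2)).
  { rewrite !Cmod_mult, Cmod_cpow_Ci, Rmult_1_l, Cmod_R, Rabs_right, <- Rpower_mult_distr
      by (lra || (left; apply Rpower_gt_0)).
    pose proof (psi_inv_le k A f ltac:(lra) HA Hpsi x ltac:(lra)) as Hinv.
    pose proof (Rpower_gt_0 x (k - 5 / 2)). pose proof (Rpower_gt_0 (sqrt (INR N)) (k - 5 / 2)).
    apply Rle_trans with (A * Rpower 2 (k - 2) * (Rpower (sqrt (INR N)) (k - 5 / 2) * Rpower x (k - 5 / 2))).
    { apply Rmult_le_compat_r; [apply Rmult_le_pos; lra|exact Hinv]. }
    unfold c3. rewrite !Rmult_assoc. apply Rmult_le_compat_l; [exact HA|].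
    apply Rmult_le_compat_l; [left; apply Rpower_gt_0|]. apply Rmult_le_compat_l; lra. }
  unfold Cminus. eapply Rle_trans; [apply Cmod_triangle|].
  pose proof (Cmod_triangle (Pk2 k m N f (0, x)) (- psi k f (INR N * x))) as Htri.
  rewrite Cmod_opp in Htri. lra.
Qed.
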